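(* Let $\mathbf{W}^0$ be a real $N\times N$ matrix, let $a,w\in\mathbb{R}$ and $S_x>0$ with the spectral radius of $aw\mathbf{W}^0$ less than $1$, let $\mathbf{S}_y=S_x(\mathbf{I}-aw\mathbf{W}^0)^{-1}(\mathbf{I}-aw(\mathbf{W}^0)^T)^{-1}$, and set $g=Naw$. Let $\{1,\dots,N\}=V_1\sqcup\dots\sqcup V_b$ be a partition into nonempty subpopulations of sizes $N_\alpha=|V_\alpha|$, and let $\boldsymbol\kappa_n,\boldsymbol\kappa_{n,m}$ be the $b\times b$ subpopulation motif cumulants defined below. Assume that for some submultiplicative matrix norm $\|\cdot\|$, $\sum_{n\ge1}|g|^n\|\boldsymbol\kappa_n\mathbf{E}\|<1$, $\sum_{n\ge1}|g|^n\|\mathbf{E}\boldsymbol\kappa_n^T\|<1$ and $\sum_{n,m\ge1}|g|^{n+m}\|\boldsymbol\kappa_{n,m}\|<\infty$. Then $$\frac{\langle\mathbf{S}_y\rangle_B}{S_x}=\frac1N\Big(\mathbf{I}-\sum_{n=1}^\infty g^n\boldsymbol\kappa_n\mathbf{E}\Big)^{-1}\Big(\mathbf{E}^{-1}+\sum_{n,m=1}^\infty g^{n+m}\boldsymbol\kappa_{n,m}\Big)\Big(\mathbf{I}-\sum_{m=1}^\infty g^m\mathbf{E}\boldsymbol\kappa_m^T\Big)^{-1}.$$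
   Context: $\mathbf{S}_y$ is the zero-frequency cross-spectrum matrix of a network of linearly interacting stochastic units with coupling $w\mathbf{W}^0$, identical response (zero-frequency value $a$) and independent baseline noise of spectrum $S_x$. Block average: for an $N\times N$ matrix $\mathbf{M}$, $\langle\mathbf{M}\rangle_B$ is the $b\times b$ matrix with $(\langle\mathbf{M}\rangle_B)_{p,q}=\frac{1}{N_pN_q}\sum_{i\in V_p,\,j\in V_q}\mathbf{M}_{ij}$. $\mathbf{E}=\mathrm{diag}(N_1/N,\dots,N_b/N)$. Subpopulation motif moments: for $n,m\ge0$, $\boldsymbol\mu_{n,m}=\langle(\mathbf{W}^0)^n((\mathbf{W}^0)^T)^m\rangle_B/N^{n+m-1}$ (a $b\times b$ matrix) and $\boldsymbol\mu_n:=\boldsymbol\mu_{n,0}$. A composition of a positive integer $n$ is an ordered tuple $(c_1,\dots,c_t)$ of positive integers summing to $n$; $\mathcal{C}(n)$ is the set of compositions of $n$. Subpopulation motif cumulants: the $b\times b$ matrices $\boldsymbol\kappa_n$ ($n\ge1$) and $\boldsymbol\kappa_{n,m}$ ($n,m\ge1$) are defined recursively (uniquely) by requiring, for all $n,m\ge1$, $$\boldsymbol\mu_n=\sum_{(c_1,\dots,c_t)\in\mathcal{C}(n)}\boldsymbol\kappa_{c_1}\mathbf{E}\boldsymbol\kappa_{c_2}\mathbf{E}\cdots\mathbf{E}\boldsymbol\kappa_{c_t},$$ $$\boldsymbol\mu_{n,m}=\sum_{\substack{(c_1,\dots,c_t)\in\mathcal{C}(n)\\(d_1,\dots,d_s)\in\mathcal{C}(m)}}\boldsymbol\kappa_{c_1}\mathbf{E}\cdots\boldsymbol\kappa_{c_{t-1}}\mathbf{E}\,\big(\boldsymbol\kappa_{c_t,d_1}+\boldsymbol\kappa_{c_t}\mathbf{E}\boldsymbol\kappa_{d_1}^T\big)\,\mathbf{E}\boldsymbol\kappa_{d_2}^T\cdots\mathbf{E}\boldsymbol\kappa_{d_s}^T,$$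 where the factors before (after) the middle bracket are absent when $t=1$ ($s=1$). *)

(* real numbers from Stdlib Reals; matrices are functions
   nat -> nat -> R, only entries with indices below the relevant dimension
   are meaningful. *)
From Stdlib Require Import Reals List Arith.
Import ListNotations.
Open Scope R_scope.

Definition mat := nat -> nat -> R.

Fixpoint rsum (n : nat) (f : nat -> R) : R :=
  match n with O => 0 | S k => rsum k f + f k end.

Definition mzero : mat := fun _ _ => 0.
Definition mid : mat := fun i j => if Nat.eqb i j then 1 else 0.
Definition madd (A B : mat) : mat := fun i j => A i j + B i j.
Definition mscale (c : R) (A : mat) : mat := fun i j => c * A i j.
Definition mtr (A : mat) : mat := fun i j => A j i.
Definition mmul (n : nat) (A B : mat) : mat :=
  fun i j => rsum n (fun k => A i k * B k j).
Fixpoint mpow (n : nat) (A : mat) (k : nat) : mat :=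
  match k with O => mid | S k' => mmul n (mpow n A k') A end.
Definition msumL (l : list mat) : mat := fold_right madd mzero l.

Definition is_inverse (n : nat) (A B : mat) : Prop :=
  forall i j, (i < n)%nat -> (j < n)%nat ->
    mmul n A B i j = mid i j /\ mmul n B A i j = mid i j.

(* spectral radius of the real n x n matrix A is < 1: every complex
   eigenvalue alpha + i beta (eigenvector u + i v <> 0) has modulus < 1 *)
Definition spectral_radius_lt1 (n : nat) (A : mat) : Prop :=
  forall (alpha beta : R) (u v : nat -> R),
    (exists i, (i < n)%nat /\ (u i <> 0 \/ v i <> 0)) ->
    (forall i, (i < n)%nat ->
       rsum n (fun k => A i k * u k) = alpha * u i - beta * v i /\
       rsum n (fun k => A i k * v k) = beta * u i + alpha * v i) ->
    alpha ^ 2 + beta ^ 2 < 1.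

(* partition of {0..N-1} into b nonempty blocks V_p = {i | blk i = p} *)
Definition is_partition (N b : nat) (blk : nat -> nat) : Prop :=
  (forall i, (i < N)%nat -> (blk i < b)%nat) /\
  (forall p, (p < b)%nat -> exists i, (i < N)%nat /\ blk i = p).

Definition bsize (N : nat) (blk : nat -> nat) (p : nat) : R :=
  rsum N (fun i => if Nat.eqb (blk i) p then 1 else 0).

Definition blockavg (N : nat) (blk : nat -> nat) (M : mat) : mat :=
  fun p q => / (bsize N blk p * bsize N blk q) *
    rsum N (fun i => rsum N (fun j =>
      if andb (Nat.eqb (blk i) p) (Nat.eqb (blk j) q) then M i j else 0)).

Definition Emat (N : nat) (blk : nat -> nat) : mat :=
  fun p q => if Nat.eqb p q then bsize N blk p / INR N else 0.
Definition Einv (N : nat) (blk : nat -> nat) : mat :=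
  fun p q => if Nat.eqb p q then INR N / bsize N blk p else 0.

Definition mu (N : nat) (blk : nat -> nat) (W : mat) (n m : nat) : mat :=
  fun p q => INR N / INR N ^ (n + m) *
    blockavg N blk (mmul N (mpow N W n) (mpow N (mtr W) m)) p q.

(* compositions of n (ordered tuples of positive integers summing to n) *)
Fixpoint compsF (fuel n : nat) : list (list nat) :=
  match fuel with
  | O => match n with O => [[]] | _ => [] end
  | S f => match n with
           | O => [[]]
           | _ => flat_map (fun c => map (cons c) (compsF f (n - c))) (seq 1 n)
           end
  end.
Definition comps (n : nat) : list (list nat) := compsF n n.

Fixpoint chainK (b : nat) (E : mat) (kap : nat -> mat) (l : list nat) : mat :=
  match l with
  | [] => mid
  | c :: l' => match l' with
               | [] => kap c
               | _ :: _ => mmul b (mmul b (kap c) E) (chainK b E kap l')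
               end
  end.

Definition Lpart (b : nat) (E : mat) (kap : nat -> mat) (l : list nat) : mat :=
  fold_right (fun c acc => mmul b (mmul b (kap c) E) acc) mid l.
Definition Rpart (b : nat) (E : mat) (kap : nat -> mat) (l : list nat) : mat :=
  fold_right (fun d acc => mmul b (mmul b E (mtr (kap d))) acc) mid l.

Definition mixterm (b : nat) (E : mat) (kap : nat -> mat) (kap2 : nat -> nat -> mat)
    (c d : list nat) : mat :=
  let ct := last c 0%nat in
  let d1 := hd 0%nat d in
  mmul b (mmul b (Lpart b E kap (removelast c))
                 (madd (kap2 ct d1) (mmul b (mmul b (kap ct) E) (mtr (kap d1)))))
         (Rpart b E kap (tl d)).

Definition are_motif_cumulants (N b : nat) (blk : nat -> nat) (W : mat)
    (kap : nat -> mat) (kap2 : nat -> nat -> mat) : Prop :=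
  let E := Emat N blk in
  (forall n p q, (1 <= n)%nat -> (p < b)%nat -> (q < b)%nat ->
     mu N blk W n 0 p q = msumL (map (chainK b E kap) (comps n)) p q) /\
  (forall n m p q, (1 <= n)%nat -> (1 <= m)%nat -> (p < b)%nat -> (q < b)%nat ->
     mu N blk W n m p q =
     msumL (flat_map (fun c => map (fun d => mixterm b E kap kap2 c d) (comps m))
                     (comps n)) p q).

Definition is_submult_norm (b : nat) (nrm : mat -> R) : Prop :=
  (forall A B, (forall i j, (i < b)%nat -> (j < b)%nat -> A i j = B i j) ->
     nrm A = nrm B) /\
  (forall A, 0 <= nrm A) /\
  (forall A, nrm A = 0 -> forall i j, (i < b)%nat -> (j < b)%nat -> A i j = 0) /\
  (forall c A, nrm (mscale c A) = Rabs c * nrm A) /\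
  (forall A B, nrm (madd A B) <= nrm A + nrm B) /\
  (forall A B, nrm (mmul b A B) <= nrm A * nrm B).

Definition mseries (b : nat) (f : nat -> mat) (L : mat) : Prop :=
  forall i j, (i < b)%nat -> (j < b)%nat ->
    Un_cv (fun K => rsum K (fun n => f (S n) i j)) (L i j).
Definition mseries2 (b : nat) (f : nat -> nat -> mat) (L : mat) : Prop :=
  forall i j, (i < b)%nat -> (j < b)%nat ->
    Un_cv (fun K => rsum K (fun n => rsum K (fun m => f (S n) (S m) i j))) (L i j).

(* Let T = aw W0 and g = N a w.  Because the spectral radius of T is below 1, the
   entries of T^k are absolutely summable, so P = (I - T)^-1 = sum_k T^k and
   Q = sum_k (T^T)^k; averaging over blocks gives
        N <P Q>_B = lim_K sum_{n,m<K} g^(n+m) mu_{n,m}                      (1)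
   On the other side, the defining relations of the cumulants express mu_{n,0}
   and mu_{n,m} as sums over compositions.  Grouping a composition by its last
   (resp. first) part turns these sums into Cauchy products of the series
        L = sum_n g^n sum_{c in C(n)} (kappa_c1 E)...(kappa_ct E),
        K_L = sum_{n>=1} g^n kappa_n E,
   and L is the inverse of I - K_L (resolvent identity).  Absolute summability,
   needed for the Cauchy products, follows from the norm hypotheses through a
   geometric bound.  Splitting (1) according to n = 0 or n >= 1 and m = 0 or
   m >= 1 and simplifying with the resolvent identities yields the formula. *)

From Stdlib Require Import Reals List Arith Lia Lra.
From Stdlib Require Import FunctionalExtensionality IndefiniteDescription Setoid Morphisms.
Import ListNotations.
Open Scope bool_scope.
Open Scope R_scope.

Lemma rsum_ext n f g : (forall k, (k < n)%nat -> f k = g k) -> rsum n f = rsum n g.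
Proof. induction n; simpl; intros H; auto. rewrite IHn by (intros; apply H; lia). rewrite H by lia. auto. Qed.

#[global] Instance rsum_proper : Proper (eq ==> pointwise_relation nat eq ==> eq) rsum.
Proof. intros n n' <- f g H. apply rsum_ext. intros; apply H. Qed.

Lemma rsum_plus n f g : rsum n (fun k => f k + g k) = rsum n f + rsum n g.
Proof. induction n; simpl; [lra|]. rewrite IHn. lra. Qed.

Lemma rsum_minus n f g : rsum n (fun k => f k - g k) = rsum n f - rsum n g.
Proof. induction n; simpl; [lra|]. rewrite IHn. lra. Qed.

Lemma rsum_scal_l n c f : rsum n (fun k => c * f k) = c * rsum n f.
Proof. induction n; simpl; [lra|]. rewrite IHn. lra. Qed.

Lemma rsum_scal_r n c f : rsum n (fun k => f k * c) = rsum n f * c.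
Proof. induction n; simpl; [lra|]. rewrite IHn. lra. Qed.

Lemma rsum_zero n f : (forall k, (k < n)%nat -> f k = 0) -> rsum n f = 0.
Proof. induction n; simpl; intros H; [lra|]. rewrite IHn by (intros; apply H; lia). rewrite H by lia. lra. Qed.

Lemma rsum_swap n m (f : nat -> nat -> R) :
  rsum n (fun i => rsum m (fun j => f i j)) = rsum m (fun j => rsum n (fun i => f i j)).
Proof.
induction n; simpl; [symmetry; apply rsum_zero; auto|].
rewrite IHn, <- rsum_plus. auto.
Qed.

Lemma rsum_le n f g : (forall k, (k < n)%nat -> f k <= g k) -> rsum n f <= rsum n g.
Proof.
induction n; simpl; intros H; [lra|].
assert (f n <= g n) by (apply H; lia).
assert (rsum n f <= rsum n g) by (apply IHn; intros; apply H; lia). lra.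
Qed.

Lemma rsum_nonneg n f : (forall k, (k < n)%nat -> 0 <= f k) -> 0 <= rsum n f.
Proof. intros H. rewrite <- (rsum_zero n (fun _ => 0)) by auto. apply rsum_le. auto. Qed.

Lemma rsum_abs n f : Rabs (rsum n f) <= rsum n (fun k => Rabs (f k)).
Proof.
induction n; simpl; [rewrite Rabs_R0; lra|].
eapply Rle_trans; [apply Rabs_triang|]. lra.
Qed.

Lemma rsum_split n m f : rsum (n + m) f = rsum n f + rsum m (fun k => f (n + k)%nat).
Proof.
induction m; simpl; [rewrite Nat.add_0_r; lra|].
rewrite Nat.add_succ_r. simpl. rewrite IHm. lra.
Qed.

Lemma rsum_S_r n f : rsum (S n) f = rsum n f + f n.
Proof. reflexivity. Qed.

Lemma rsum_S_l n f : rsum (S n) f = f 0%nat + rsum n (fun k => f (S k)).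
Proof. replace (S n) with (1 + n)%nat by lia. rewrite rsum_split. simpl. lra. Qed.

Lemma rsum_mono n m f : (forall k, 0 <= f k) -> (n <= m)%nat -> rsum n f <= rsum m f.
Proof.
intros H Hnm. replace m with (n + (m - n))%nat by lia. rewrite rsum_split.
assert (0 <= rsum (m - n) (fun k => f (n + k)%nat)) by (apply rsum_nonneg; auto). lra.
Qed.

Lemma rsum_term_le n f k0 : (forall k, 0 <= f k) -> (k0 < n)%nat -> f k0 <= rsum n f.
Proof.
intros Hf Hk. apply Rle_trans with (rsum (S k0) f); [|apply rsum_mono; auto].
simpl. pose proof (rsum_nonneg k0 f (fun k _ => Hf k)). lra.
Qed.

Lemma rsum_delta n t h : (t < n)%nat -> rsum n (fun k => if Nat.eqb k t then h k else 0) = h t.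
Proof.
induction n; intros Ht; [lia|]. simpl.
destruct (Nat.eq_dec t n) as [->|Hne].
- rewrite Nat.eqb_refl, rsum_zero; [lra|]. intros k Hk. destruct (Nat.eqb_spec k n); [lia|auto].
- rewrite IHn by lia. destruct (Nat.eqb_spec n t); [lia|]. lra.
Qed.

Lemma rsum_rev n f : rsum n (fun k => f (n - 1 - k)%nat) = rsum n f.
Proof.
induction n; auto. rewrite rsum_S_l. simpl rsum at 2. rewrite <- IHn.
replace (S n - 1 - 0)%nat with n by lia. rewrite Rplus_comm. f_equal.
apply rsum_ext. intros. f_equal. lia.
Qed.

Lemma rsum_telescope K f : rsum K (fun k => f k - f (S k)) = f 0%nat - f K.
Proof. induction K; simpl; [ring|]. rewrite IHK. ring. Qed.

(* Truncations of sums are written with the 0/1 indicator of a boolean. *)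
Definition ind (c : bool) : R := if c then 1 else 0.

Lemma ind01 c : 0 <= ind c <= 1.
Proof. unfold ind. destruct c; lra. Qed.

Lemma rsum_ind_lt n h f : (h <= n)%nat -> rsum n (fun k => ind (Nat.ltb k h) * f k) = rsum h f.
Proof.
intros H. replace n with (h + (n - h))%nat by lia. rewrite rsum_split.
rewrite (rsum_ext h _ f), (rsum_zero (n - h)); [lra| |].
- intros k _. unfold ind. destruct (Nat.ltb_spec (h + k) h); [lia|]. lra.
- intros k Hk. unfold ind. destruct (Nat.ltb_spec k h); [|lia]. lra.
Qed.

Lemma rsum_triangle_swap n (H : nat -> nat -> R) :
  rsum n (fun k => rsum (n - k) (fun l => H k l)) = rsum n (fun l => rsum (n - l) (fun k => H k l)).
Proof.
assert (Hrow : forall k, (k < n)%nat ->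
  rsum (n - k) (fun l => H k l) = rsum n (fun l => ind (Nat.ltb (k + l) n) * H k l)).
{ intros k Hk. rewrite <- (rsum_ind_lt n (n - k)) by lia. apply rsum_ext; intros l _.
  unfold ind. destruct (Nat.ltb_spec l (n - k)); destruct (Nat.ltb_spec (k + l) n); try lia; auto. }
assert (Hcol : forall l, (l < n)%nat ->
  rsum (n - l) (fun k => H k l) = rsum n (fun k => ind (Nat.ltb (k + l) n) * H k l)).
{ intros l Hl. rewrite <- (rsum_ind_lt n (n - l)) by lia. apply rsum_ext; intros k _.
  unfold ind. destruct (Nat.ltb_spec k (n - l)); destruct (Nat.ltb_spec (k + l) n); try lia; auto. }
rewrite (rsum_ext n _ _ Hrow), (rsum_ext n _ _ Hcol). apply rsum_swap.
Qed.

Definition box K (f : nat -> nat -> R) := rsum K (fun i => rsum K (fun j => f i j)).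

Lemma rsum_prod K f g : rsum K f * rsum K g = box K (fun p i => f p * g i).
Proof. unfold box. rewrite <- rsum_scal_r. apply rsum_ext. intros p _. rewrite <- rsum_scal_l. auto. Qed.

Lemma rsum_antidiag K (F : nat -> nat -> R) :
  rsum K (fun n => rsum (S n) (fun i => F (n - i)%nat i)) =
  box K (fun p i => ind (Nat.ltb (p + i) K) * F p i).
Proof.
unfold box.
assert (Hdiag : forall n, (n < K)%nat -> rsum (S n) (fun i => F (n - i)%nat i) =
   rsum K (fun p => rsum K (fun i => if Nat.eqb (p + i) n then F p i else 0))).
{ intros n Hn. rewrite rsum_swap, <- (rsum_ind_lt K (S n)) by lia. apply rsum_ext. intros i Hi.
  unfold ind. destruct (Nat.ltb_spec i (S n)).
  - rewrite Rmult_1_l, (rsum_ext K _ (fun p => if Nat.eqb p (n - i) then F p i else 0)).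
    + rewrite rsum_delta by lia. auto.
    + intros p Hp. destruct (Nat.eqb_spec (p + i) n); destruct (Nat.eqb_spec p (n - i)); auto; lia.
  - rewrite Rmult_0_l, rsum_zero; auto. intros p Hp. destruct (Nat.eqb_spec (p + i) n); auto; lia. }
rewrite (rsum_ext K _ _ Hdiag), rsum_swap. apply rsum_ext. intros p Hp.
rewrite rsum_swap. apply rsum_ext. intros i Hi.
rewrite (rsum_ext K _ (fun n => if Nat.eqb n (p + i) then F p i else 0)).
2:{ intros n Hn. destruct (Nat.eqb_spec (p+i) n); destruct (Nat.eqb_spec n (p+i)); auto; lia. }
unfold ind. destruct (Nat.ltb_spec (p + i) K).
- rewrite rsum_delta by auto. lra.
- rewrite rsum_zero; [lra|]. intros k Hk. destruct (Nat.eqb_spec k (p + i)); [lia|auto].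
Qed.

Lemma box_mono f K K' : (forall i j, 0 <= f i j) -> (K <= K')%nat -> box K f <= box K' f.
Proof.
intros Hf HK. unfold box. apply Rle_trans with (rsum K (fun i => rsum K' (fun j => f i j))).
- apply rsum_le; intros. apply rsum_mono; auto.
- apply rsum_mono; auto. intros. apply rsum_nonneg; auto.
Qed.

Lemma box_ind K K' f : (K <= K')%nat ->
  box K f = box K' (fun i j => ind (Nat.ltb i K) * (ind (Nat.ltb j K) * f i j)).
Proof.
intros H. unfold box. rewrite <- (rsum_ind_lt K' K) by auto. apply rsum_ext; intros i _.
rewrite rsum_scal_l. f_equal. rewrite <- (rsum_ind_lt K' K) by auto. auto.
Qed.

Lemma box_S K (F : nat -> nat -> R) :
  box (S K) F = F 0%nat 0%nat + rsum K (fun n => F (S n) 0%nat) + rsum K (fun m => F 0%nat (S m)) +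
                box K (fun n m => F (S n) (S m)).
Proof.
unfold box. rewrite rsum_S_l.
rewrite (rsum_ext K _ (fun n => F (S n) 0%nat + rsum K (fun m => F (S n) (S m)))).
- rewrite rsum_plus, rsum_S_l. ring.
- intros. apply rsum_S_l.
Qed.

Lemma cv_ext (u v : nat -> R) l : (forall K, u K = v K) -> Un_cv u l -> Un_cv v l.
Proof. intros E H e He. destruct (H e He) as [N HN]. exists N. intros. rewrite <- E. auto. Qed.

Lemma cv_const c : Un_cv (fun _ => c) c.
Proof. intros e He. exists 0%nat. intros. unfold R_dist. rewrite Rminus_diag, Rabs_R0. auto. Qed.

Lemma cv_scal c u l : Un_cv u l -> Un_cv (fun K => c * u K) (c * l).
Proof. intros H. apply CV_mult; auto. apply cv_const. Qed.

Lemma cv_rsum n (u : nat -> nat -> R) (l : nat -> R) :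
  (forall k, (k < n)%nat -> Un_cv (fun K => u K k) (l k)) ->
  Un_cv (fun K => rsum n (u K)) (rsum n l).
Proof.
induction n; intros H; simpl; [apply cv_const|].
apply CV_plus; [apply IHn; intros; apply H; lia | apply H; lia].
Qed.

Lemma cv_shift u l : Un_cv u l -> Un_cv (fun K => u (S K)) l.
Proof. intros H e He. destruct (H e He) as [N HN]. exists N. intros. apply HN. lia. Qed.

Lemma cv_unshift u l : Un_cv (fun K => u (S K)) l -> Un_cv u l.
Proof.
intros H e He. destruct (H e He) as [N HN]. exists (S N). intros n Hn.
replace n with (S (n - 1)) by lia. apply HN. lia.
Qed.

Lemma half_le K : (Nat.div2 K <= K)%nat.
Proof. pose proof (Nat.div2_odd K). destruct (Nat.odd K); simpl in *; lia. Qed.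

Lemma half_sum K p i : (p < Nat.div2 K)%nat -> (i < Nat.div2 K)%nat -> (p + i < K)%nat.
Proof. pose proof (Nat.div2_odd K). destruct (Nat.odd K); simpl in *; lia. Qed.

Lemma cv_half u l : Un_cv u l -> Un_cv (fun K => u (Nat.div2 K)) l.
Proof.
intros H e He. destruct (H e He) as [N HN]. exists (2 * N)%nat. intros n Hn.
apply HN. pose proof (Nat.div2_odd n). destruct (Nat.odd n); simpl in *; lia.
Qed.

Lemma cv_half_defect (P T w : nat -> R) l lw :
  Un_cv P l -> Un_cv w lw -> (forall K, Rabs (P K - T K) <= w K - w (Nat.div2 K)) ->
  Un_cv T l.
Proof.
intros HP Hw Hb.
assert (Hd : Un_cv (fun K => w K - w (Nat.div2 K)) 0).
{ replace 0 with (lw - lw) by ring. exact (CV_minus _ _ _ _ Hw (cv_half _ _ Hw)). }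
assert (H0 : Un_cv (fun K => P K - T K) 0).
{ intros e He. destruct (Hd e He) as [N HN]. exists N. intros n Hn.
  specialize (HN n Hn). specialize (Hb n). unfold R_dist in *. rewrite Rminus_0_r in *.
  pose proof (Rle_abs (w n - w (Nat.div2 n))). lra. }
pose proof (CV_minus _ _ _ _ HP H0) as H1. rewrite Rminus_0_r in H1.
apply (cv_ext (fun i => P i - (P i - T i))); [intros; ring | exact H1].
Qed.

Lemma growing_le_lim (u : nat -> R) l : (forall K, u K <= u (S K)) -> Un_cv u l -> forall K, u K <= l.
Proof.
intros Hg Hl K. apply Rnot_lt_le. intros Hlt.
destruct (Hl (u K - l)) as [N HN]; [lra|].
assert (Hm : forall n, (K <= n)%nat -> u K <= u n).
{ intros n Hn. induction Hn; [lra|]. specialize (Hg m). lra. }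
specialize (HN (max N K) (Nat.le_max_l _ _)). specialize (Hm (max N K) (Nat.le_max_r _ _)).
unfold R_dist in HN. rewrite Rabs_right in HN by lra. lra.
Qed.

Lemma rsum_le_lim (f : nat -> R) s : (forall n, 0 <= f n) -> Un_cv (fun K => rsum K f) s ->
  forall K, rsum K f <= s.
Proof. intros Hf. apply growing_le_lim. intros K. simpl. specialize (Hf K). lra. Qed.

Lemma box_le_lim (f : nat -> nat -> R) s : (forall n m, 0 <= f n m) -> Un_cv (fun K => box K f) s ->
  forall K, box K f <= s.
Proof. intros Hf. apply growing_le_lim. intros K. apply box_mono; auto. Qed.

Lemma growing_bounded_cv (u : nat -> R) B :
  (forall K, u K <= u (S K)) -> (forall K, u K <= B) -> exists l, Un_cv u l.
Proof.
intros Hg Hb. destruct (growing_cv u Hg) as [l Hl]; [exists B; intros x [i ->]; auto|].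
exists l. exact Hl.
Qed.

Lemma cv_dominated_increments (u v : nat -> R) lv :
  (forall K K', (K <= K')%nat -> Rabs (u K' - u K) <= v K' - v K) -> Un_cv v lv ->
  exists l, Un_cv u l.
Proof.
intros H Hv.
assert (Cv : Cauchy_crit v) by (apply CV_Cauchy; exists lv; auto).
assert (Cu : Cauchy_crit u).
{ intros e He. destruct (Cv e He) as [N HN]. exists N. intros n m Hn Hm. unfold R_dist in *.
  destruct (Nat.le_ge_cases n m) as [Hnm|Hnm].
  - specialize (H n m Hnm). specialize (HN m n Hm Hn). rewrite Rabs_minus_sym.
    pose proof (Rle_abs (v m - v n)). lra.
  - specialize (H m n Hnm). specialize (HN n m Hn Hm).
    pose proof (Rle_abs (v n - v m)). lra. }
destruct (R_complete u Cu) as [l Hl]. exists l. auto.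
Qed.

Lemma abs_partial_sums_cv (a : nat -> R) B :
  (forall K, rsum K (fun k => Rabs (a k)) <= B) -> exists l, Un_cv (fun K => rsum K (fun k => Rabs (a k))) l.
Proof.
intros HB. apply (growing_bounded_cv _ B); auto.
intros K. simpl. pose proof (Rabs_pos (a K)). lra.
Qed.

Lemma abs_sum_cv (a : nat -> R) B : (forall K, rsum K (fun k => Rabs (a k)) <= B) ->
  exists l, Un_cv (fun K => rsum K a) l.
Proof.
intros HB. destruct (abs_partial_sums_cv a B HB) as [lv Hlv].
apply (cv_dominated_increments _ (fun K => rsum K (fun k => Rabs (a k))) lv); auto. intros K K' HK.
replace K' with (K + (K' - K))%nat by lia. rewrite !rsum_split.
replace (rsum K a + rsum (K' - K) (fun k => a (K + k)%nat) - rsum K a)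
  with (rsum (K' - K) (fun k => a (K + k)%nat)) by ring.
replace (rsum K (fun k => Rabs (a k)) + rsum (K' - K) (fun k => Rabs (a (K + k)%nat)) -
   rsum K (fun k => Rabs (a k))) with (rsum (K' - K) (fun k => Rabs (a (K + k)%nat))) by ring.
apply rsum_abs.
Qed.

Lemma abs_sum_term_cv0 (a : nat -> R) B : (forall K, rsum K (fun k => Rabs (a k)) <= B) -> Un_cv a 0.
Proof.
intros H. destruct (abs_sum_cv a B H) as [l Hl].
pose proof (CV_minus _ _ _ _ (cv_shift _ _ Hl) Hl) as H2. rewrite Rminus_diag in H2.
apply (cv_ext (fun K => rsum (S K) a - rsum K a)); auto. intros; simpl; ring.
Qed.

Lemma box_ext K f g : (forall i j, (i < K)%nat -> (j < K)%nat -> f i j = g i j) -> box K f = box K g.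
Proof. intros H. apply rsum_ext; intros. apply rsum_ext; intros. auto. Qed.

Lemma box_le K f g : (forall i j, (i < K)%nat -> (j < K)%nat -> f i j <= g i j) -> box K f <= box K g.
Proof. intros H. apply rsum_le; intros. apply rsum_le; intros. auto. Qed.

Lemma box_minus K f g : box K (fun i j => f i j - g i j) = box K f - box K g.
Proof. unfold box. rewrite <- rsum_minus. apply rsum_ext; intros. apply rsum_minus. Qed.

Lemma box_abs_minus K f g : Rabs (box K f - box K g) <= box K (fun i j => Rabs (f i j - g i j)).
Proof.
unfold box. rewrite <- rsum_minus. eapply Rle_trans; [apply rsum_abs|].
apply rsum_le; intros. rewrite <- rsum_minus. apply rsum_abs.
Qed.

Lemma box_scal_l K c f : c * box K f = box K (fun i j => c * f i j).
Proof. unfold box. rewrite <- rsum_scal_l. apply rsum_ext; intros. symmetry. apply rsum_scal_l. Qed.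

Lemma ind_andb x y z : ind x * (ind y * z) = ind (x && y) * z.
Proof. unfold ind. destruct x, y; simpl; ring. Qed.

(* Dropping the terms outside a region c costs at most the absolute mass
   outside any smaller region d. *)
Lemma ind_defect (c d : bool) x : (d = true -> c = true) ->
  Rabs (x - ind c * x) <= Rabs x - ind d * Rabs x.
Proof.
intros Hdc. pose proof (Rabs_pos x). unfold ind.
destruct d; [rewrite Hdc by auto|destruct c];
rewrite ?Rmult_1_l, ?Rmult_0_l, ?Rminus_0_r, ?Rminus_diag, ?Rabs_R0; lra.
Qed.

Lemma box_increment K K' f : (K <= K')%nat ->
  Rabs (box K' f - box K f) <= box K' (fun i j => Rabs (f i j)) - box K (fun i j => Rabs (f i j)).
Proof.
intros H. rewrite !(box_ind K K'), <- (box_minus K' (fun i j => Rabs (f i j))) by auto.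
eapply Rle_trans; [apply box_abs_minus|].
apply box_le; intros i j _ _. rewrite !ind_andb. apply ind_defect. auto.
Qed.

Lemma abs_box_cv (z : nat -> nat -> R) B : (forall K, box K (fun i j => Rabs (z i j)) <= B) ->
  exists l, Un_cv (fun K => box K z) l.
Proof.
intros HB.
destruct (growing_bounded_cv (fun K => box K (fun i j => Rabs (z i j))) B) as [lv Hlv]; auto.
{ intros K. apply box_mono; [intros; apply Rabs_pos | lia]. }
apply (cv_dominated_increments _ (fun K => box K (fun i j => Rabs (z i j))) lv); auto.
intros K K' HK. apply box_increment; auto.
Qed.

(** * Cauchy products of absolutely convergent series *)

(* Mertens' argument: the Cauchy-product partial sum of order K contains the
   square [0, K/2)^2 and is contained in [0, K)^2. *)
Lemma half_region K p i :
  ((p <? Nat.div2 K) && (i <? Nat.div2 K))%nat = true -> (p + i <? K)%nat = true.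
Proof. rewrite Bool.andb_true_iff, !Nat.ltb_lt. intros []. apply half_sum; auto. Qed.

Lemma cauchy_product_cv (a c : nat -> R) Ba Bc A C :
  (forall K, rsum K (fun k => Rabs (a k)) <= Ba) -> (forall K, rsum K (fun k => Rabs (c k)) <= Bc) ->
  Un_cv (fun K => rsum K a) A -> Un_cv (fun K => rsum K c) C ->
  Un_cv (fun K => rsum K (fun n => rsum (S n) (fun i => a (n - i)%nat * c i))) (A * C).
Proof.
intros Ha Hc HA HC.
destruct (abs_partial_sums_cv a Ba Ha) as [la Hla].
destruct (abs_partial_sums_cv c Bc Hc) as [lc Hlc].
apply (cv_half_defect (fun K => rsum K a * rsum K c) _
  (fun K => box K (fun p i => Rabs (a p) * Rabs (c i))) _ (la * lc)).
- apply CV_mult; auto.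
- apply (cv_ext (fun K => rsum K (fun k => Rabs (a k)) * rsum K (fun k => Rabs (c k)))).
  + intros K. apply rsum_prod.
  + apply CV_mult; auto.
- intros K. cbv beta. rewrite rsum_prod, (rsum_antidiag K (fun p i => a p * c i)).
  rewrite (box_ind (Nat.div2 K) K), <- (box_minus K (fun p i => Rabs (a p) * Rabs (c i))) by apply half_le.
  eapply Rle_trans; [apply box_abs_minus|]. apply box_le; intros p i _ _.
  rewrite ind_andb, <- Rabs_mult. apply ind_defect, half_region.
Qed.

Definition box4 K (F : nat -> nat -> nat -> nat -> R) := box K (fun p i => box K (fun q j => F p i q j)).

Lemma box4_le K F G :
  (forall p i q j, (p < K)%nat -> (i < K)%nat -> (q < K)%nat -> (j < K)%nat -> F p i q j <= G p i q j) ->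
  box4 K F <= box4 K G.
Proof. intros H. apply box_le; intros. apply box_le; intros. auto. Qed.

Lemma box4_abs_minus K F G :
  Rabs (box4 K F - box4 K G) <= box4 K (fun p i q j => Rabs (F p i q j - G p i q j)).
Proof.
eapply Rle_trans; [apply box_abs_minus|]. apply box_le; intros. apply box_abs_minus.
Qed.

Lemma box4_minus K F G : box4 K (fun p i q j => F p i q j - G p i q j) = box4 K F - box4 K G.
Proof. unfold box4. rewrite <- box_minus. apply box_ext; intros. apply box_minus. Qed.

Lemma box4_ind h K X : (h <= K)%nat ->
  box4 h X = box4 K (fun p i q j =>
    ind (((p <? h) && (i <? h)) && ((q <? h) && (j <? h)))%nat * X p i q j).
Proof.
intros H. unfold box4. rewrite (box_ind h K) by auto. apply box_ext; intros p i _ _.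
rewrite (box_ind h K), !box_scal_l by auto. apply box_ext; intros q j _ _.
unfold ind. destruct (p <? h)%nat, (i <? h)%nat, (q <? h)%nat, (j <? h)%nat; simpl; ring.
Qed.

Lemma triple_product K a z c :
  rsum K a * box K z * rsum K c = box4 K (fun p i q j => a p * z i j * c q).
Proof.
unfold box4. unfold box at 1 2. rewrite <- !rsum_scal_r. apply rsum_ext; intros p _.
rewrite <- (rsum_scal_l K (a p)), <- rsum_scal_r. apply rsum_ext; intros i _.
rewrite <- (rsum_scal_l K (a p)), rsum_prod. unfold box. rewrite rsum_swap.
apply rsum_ext; intros q _. apply rsum_ext; intros j _. ring.
Qed.

Lemma two_sided_antidiag K a z c :
  box K (fun n m => rsum (S n) (fun i => rsum (S m) (fun j => a (n - i)%nat * z i j * c (m - j)%nat))) =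
  box4 K (fun p i q j => ind (p + i <? K)%nat * (ind (q + j <? K)%nat * (a p * z i j * c q))).
Proof.
unfold box4. unfold box at 1.
rewrite (rsum_ext K _ (fun n => rsum (S n) (fun i => rsum K (fun m => rsum (S m) (fun j =>
  a (n - i)%nat * z i j * c (m - j)%nat))))) by (intros; apply rsum_swap).
rewrite (rsum_antidiag K (fun p i => rsum K (fun m => rsum (S m) (fun j => a p * z i j * c (m - j)%nat)))).
apply box_ext; intros p i _ _.
rewrite (rsum_antidiag K (fun q j => a p * z i j * c q)), box_scal_l.
apply box_ext; intros q j _ _. ring.
Qed.

Lemma two_sided_cauchy_product_cv (a c : nat -> R) (z : nat -> nat -> R) Ba Bc Bz A C Z :
  (forall K, rsum K (fun k => Rabs (a k)) <= Ba) -> (forall K, rsum K (fun k => Rabs (c k)) <= Bc) ->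
  (forall K, box K (fun i j => Rabs (z i j)) <= Bz) ->
  Un_cv (fun K => rsum K a) A -> Un_cv (fun K => rsum K c) C -> Un_cv (fun K => box K z) Z ->
  Un_cv (fun K => box K (fun n m => rsum (S n) (fun i => rsum (S m) (fun j =>
      a (n - i)%nat * z i j * c (m - j)%nat)))) (A * Z * C).
Proof.
intros Ha Hc Hz HA HC HZ.
destruct (abs_partial_sums_cv a Ba Ha) as [la Hla].
destruct (abs_partial_sums_cv c Bc Hc) as [lc Hlc].
destruct (growing_bounded_cv (fun K => box K (fun i j => Rabs (z i j))) Bz) as [lz Hlz]; auto.
{ intros K. apply box_mono; [intros; apply Rabs_pos | lia]. }
apply (cv_half_defect (fun K => rsum K a * box K z * rsum K c) _
  (fun K => box4 K (fun p i q j => Rabs (a p) * Rabs (z i j) * Rabs (c q))) _ (la * lz * lc)).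
- apply CV_mult; auto. apply CV_mult; auto.
- apply (cv_ext (fun K => rsum K (fun k => Rabs (a k)) * box K (fun i j => Rabs (z i j)) *
                          rsum K (fun k => Rabs (c k)))).
  + intros K. apply triple_product.
  + apply CV_mult; auto. apply CV_mult; auto.
- intros K. cbv beta. rewrite triple_product, two_sided_antidiag.
  rewrite (box4_ind (Nat.div2 K) K) by apply half_le.
  rewrite <- (box4_minus K (fun p i q j => Rabs (a p) * Rabs (z i j) * Rabs (c q))).
  eapply Rle_trans; [apply box4_abs_minus|]. apply box4_le; intros p i q j _ _ _ _.
  rewrite ind_andb, <- !Rabs_mult. apply ind_defect.
  rewrite !Bool.andb_true_iff. intros [Hpi Hqj]. split; apply half_region; apply Bool.andb_true_iff; auto.
Qed.

Definition meq n (A B : mat) := forall i j, (i < n)%nat -> (j < n)%nat -> A i j = B i j.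
Definition msum K (F : nat -> mat) : mat := fun i j => rsum K (fun k => F k i j).
Definition mcv n (u : nat -> mat) (L : mat) :=
  forall i j, (i < n)%nat -> (j < n)%nat -> Un_cv (fun K => u K i j) (L i j).

Lemma meq_refl n A : meq n A A. Proof. intros i j _ _. auto. Qed.
Lemma meq_sym n A B : meq n A B -> meq n B A. Proof. intros H i j Hi Hj. symmetry. auto. Qed.
Lemma meq_trans n A B C : meq n A B -> meq n B C -> meq n A C.
Proof. intros H1 H2 i j Hi Hj. rewrite H1, H2; auto. Qed.

#[global] Instance meq_equiv n : Equivalence (meq n).
Proof. split; [intros A; apply meq_refl | intros A B; apply meq_sym | intros A B C; apply meq_trans]. Qed.

Lemma mmul_assoc n A B C : mmul n (mmul n A B) C = mmul n A (mmul n B C).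
Proof.
extensionality i; extensionality j. unfold mmul.
setoid_rewrite <- rsum_scal_r. setoid_rewrite <- rsum_scal_l. rewrite rsum_swap.
apply rsum_ext; intros; apply rsum_ext; intros. ring.
Qed.

Lemma mmul_madd_l n A B C : mmul n (madd A B) C = madd (mmul n A C) (mmul n B C).
Proof. extensionality i; extensionality j. unfold mmul, madd. rewrite <- rsum_plus. apply rsum_ext; intros. ring. Qed.
Lemma mmul_madd_r n A B C : mmul n A (madd B C) = madd (mmul n A B) (mmul n A C).
Proof. extensionality i; extensionality j. unfold mmul, madd. rewrite <- rsum_plus. apply rsum_ext; intros. ring. Qed.
Lemma mmul_mscale_l n c A B : mmul n (mscale c A) B = mscale c (mmul n A B).
Proof. extensionality i; extensionality j. unfold mmul, mscale. rewrite <- rsum_scal_l. apply rsum_ext; intros. ring. Qed.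
Lemma mmul_mscale_r n c A B : mmul n A (mscale c B) = mscale c (mmul n A B).
Proof. extensionality i; extensionality j. unfold mmul, mscale. rewrite <- rsum_scal_l. apply rsum_ext; intros. ring. Qed.
Lemma mmul_msum_l n K F B : mmul n (msum K F) B = msum K (fun k => mmul n (F k) B).
Proof. extensionality i; extensionality j. unfold mmul, msum. setoid_rewrite <- rsum_scal_r. apply rsum_swap. Qed.
Lemma mmul_msum_r n K A F : mmul n A (msum K F) = msum K (fun k => mmul n A (F k)).
Proof. extensionality i; extensionality j. unfold mmul, msum. setoid_rewrite <- rsum_scal_l. apply rsum_swap. Qed.
Lemma mmul_msum2 n K K' F G :
  mmul n (msum K F) (msum K' G) = msum K (fun k => msum K' (fun l => mmul n (F k) (G l))).
Proof. rewrite mmul_msum_l. f_equal. extensionality k. apply mmul_msum_r. Qed.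

Lemma mscale_mscale c d A : mscale c (mscale d A) = mscale (c * d) A.
Proof. extensionality i; extensionality j. unfold mscale. ring. Qed.
Lemma msum_madd K F G : msum K (fun k => madd (F k) (G k)) = madd (msum K F) (msum K G).
Proof. extensionality i; extensionality j. unfold msum, madd. apply rsum_plus. Qed.
Lemma msum_mscale K c F : msum K (fun k => mscale c (F k)) = mscale c (msum K F).
Proof. extensionality i; extensionality j. unfold msum, mscale. apply rsum_scal_l. Qed.

Lemma mtr_mmul n A B : mtr (mmul n A B) = mmul n (mtr B) (mtr A).
Proof. extensionality i; extensionality j. unfold mtr, mmul. apply rsum_ext; intros; ring. Qed.
Lemma mtr_msum K F : mtr (msum K F) = msum K (fun k => mtr (F k)). Proof. reflexivity. Qed.
Lemma mtr_madd A B : mtr (madd A B) = madd (mtr A) (mtr B). Proof. reflexivity. Qed.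
Lemma mtr_mscale c A : mtr (mscale c A) = mscale c (mtr A). Proof. reflexivity. Qed.
Lemma mtr_mid : mtr mid = mid.
Proof. extensionality i; extensionality j. unfold mtr, mid. rewrite Nat.eqb_sym. auto. Qed.

Lemma mmul_mid_l n A i j : (i < n)%nat -> mmul n mid A i j = A i j.
Proof.
intros Hi. unfold mmul, mid.
rewrite (rsum_ext n _ (fun k => if Nat.eqb k i then A k j else 0)).
- apply (rsum_delta n i (fun k => A k j)); auto.
- intros k _. rewrite Nat.eqb_sym. destruct (Nat.eqb_spec k i); subst; ring.
Qed.
Lemma mmul_mid_r n A i j : (j < n)%nat -> mmul n A mid i j = A i j.
Proof.
intros Hj. unfold mmul, mid.
rewrite (rsum_ext n _ (fun k => if Nat.eqb k j then A i k else 0)).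
- apply (rsum_delta n j (fun k => A i k)); auto.
- intros k _. destruct (Nat.eqb_spec k j); subst; ring.
Qed.
Lemma mmul_mid_l' n A : meq n (mmul n mid A) A.
Proof. intros i j Hi Hj. apply mmul_mid_l; auto. Qed.
Lemma mmul_mid_r' n A : meq n (mmul n A mid) A.
Proof. intros i j Hi Hj. apply mmul_mid_r; auto. Qed.

Lemma mmul_meq n A A' B B' : meq n A A' -> meq n B B' -> meq n (mmul n A B) (mmul n A' B').
Proof. intros H1 H2 i j Hi Hj. unfold mmul. apply rsum_ext; intros. rewrite H1, H2; auto. Qed.
Lemma mtr_meq n A A' : meq n A A' -> meq n (mtr A) (mtr A').
Proof. intros H1 i j Hi Hj. unfold mtr. rewrite H1; auto. Qed.
Lemma msum_meq n K F G : (forall k, (k < K)%nat -> meq n (F k) (G k)) -> meq n (msum K F) (msum K G).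
Proof. intros H i j Hi Hj. unfold msum. apply rsum_ext; intros. apply H; auto. Qed.

#[global] Instance mmul_proper n : Proper (meq n ==> meq n ==> meq n) (mmul n).
Proof. intros A A' HA B B' HB. apply mmul_meq; auto. Qed.
#[global] Instance madd_proper n : Proper (meq n ==> meq n ==> meq n) madd.
Proof. intros A A' HA B B' HB i j Hi Hj. unfold madd. rewrite HA, HB; auto. Qed.
#[global] Instance mscale_proper n c : Proper (meq n ==> meq n) (mscale c).
Proof. intros A A' HA i j Hi Hj. unfold mscale. rewrite HA; auto. Qed.
#[global] Instance mtr_proper n : Proper (meq n ==> meq n) mtr.
Proof. intros A A' HA. apply mtr_meq; auto. Qed.

Lemma mcv_ext n u v L : (forall K, meq n (u K) (v K)) -> mcv n u L -> mcv n v L.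
Proof. intros E H i j Hi Hj. apply (cv_ext (fun K => u K i j)); auto. intros; apply E; auto. Qed.
Lemma mcv_lim n u L L' : meq n L L' -> mcv n u L -> mcv n u L'.
Proof. intros E H i j Hi Hj. rewrite <- E; auto. Qed.
Lemma mcv_unique n u L L' : mcv n u L -> mcv n u L' -> meq n L L'.
Proof. intros H1 H2 i j Hi Hj. eapply UL_sequence; eauto. Qed.
Lemma mcv_const n A : mcv n (fun _ => A) A.
Proof. intros i j _ _. apply cv_const. Qed.
Lemma mcv_madd n u v A B : mcv n u A -> mcv n v B -> mcv n (fun K => madd (u K) (v K)) (madd A B).
Proof. intros H1 H2 i j Hi Hj. apply CV_plus; auto. Qed.
Lemma mcv_mtr n u A : mcv n u A -> mcv n (fun K => mtr (u K)) (mtr A).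
Proof. intros H1 i j Hi Hj. apply H1; auto. Qed.
Lemma mcv_mmul n u v A B : mcv n u A -> mcv n v B -> mcv n (fun K => mmul n (u K) (v K)) (mmul n A B).
Proof. intros H1 H2 i j Hi Hj. unfold mmul. apply cv_rsum. intros k Hk. apply CV_mult; auto. Qed.
Lemma mcv_unshift n u A : mcv n (fun K => u (S K)) A -> mcv n u A.
Proof. intros H i j Hi Hj. apply (cv_unshift (fun K => u K i j)); auto. Qed.

Definition mabs1 n (a : nat -> mat) := forall i j, (i < n)%nat -> (j < n)%nat ->
  exists B, forall K, rsum K (fun k => Rabs (a k i j)) <= B.
Definition mabs2 n (z : nat -> nat -> mat) := forall i j, (i < n)%nat -> (j < n)%nat ->
  exists B, forall K, box K (fun k l => Rabs (z k l i j)) <= B.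

Lemma choose_matrix n (P : nat -> nat -> R -> Prop) :
  (forall i j, (i < n)%nat -> (j < n)%nat -> exists l, P i j l) ->
  exists L : mat, forall i j, (i < n)%nat -> (j < n)%nat -> P i j (L i j).
Proof.
intros H.
assert (H' : forall i j, exists l, (i < n)%nat -> (j < n)%nat -> P i j l).
{ intros i j. destruct (lt_dec i n) as [Hi|Hi]; [destruct (lt_dec j n) as [Hj|Hj]|].
  - destruct (H i j Hi Hj) as [l Hl]. exists l; auto.
  - exists 0. intros; lia.
  - exists 0. intros; lia. }
exists (fun i j => proj1_sig (constructive_indefinite_description _ (H' i j))).
intros i j. exact (proj2_sig (constructive_indefinite_description _ (H' i j))).
Qed.

Lemma mabs1_cv n a : mabs1 n a -> exists L, mcv n (fun K => msum K a) L.
Proof.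
intros H. apply (choose_matrix n (fun i j l => Un_cv (fun K => rsum K (fun k => a k i j)) l)).
intros i j Hi Hj. destruct (H i j Hi Hj) as [B HB]. exact (abs_sum_cv _ B HB).
Qed.

Lemma mabs2_cv n z : mabs2 n z -> exists L, mcv n (fun K => msum K (fun k => msum K (fun l => z k l))) L.
Proof.
intros H. apply (choose_matrix n (fun i j L => Un_cv (fun K => box K (fun k l => z k l i j)) L)).
intros i j Hi Hj. destruct (H i j Hi Hj) as [B HB]. exact (abs_box_cv _ B HB).
Qed.

Lemma mcauchy_product_cv n (a c : nat -> mat) A C :
  mabs1 n a -> mabs1 n c -> mcv n (fun K => msum K a) A -> mcv n (fun K => msum K c) C ->
  mcv n (fun K => msum K (fun m => msum (S m) (fun i => mmul n (a (m - i)%nat) (c i)))) (mmul n A C).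
Proof.
intros Ha Hc HA HC p q Hp Hq. unfold msum, mmul.
apply (cv_ext (fun K => rsum n (fun k => rsum K (fun m => rsum (S m) (fun i => a (m - i)%nat p k * c i k q))))).
{ intros K. rewrite rsum_swap. apply rsum_ext; intros. apply rsum_swap. }
apply cv_rsum. intros k Hk.
destruct (Ha p k) as [Ba HBa]; auto. destruct (Hc k q) as [Bc HBc]; auto.
apply (cauchy_product_cv (fun t => a t p k) (fun t => c t k q) Ba Bc); [auto | auto | apply HA | apply HC]; auto.
Qed.

Lemma rsum_pull2 M n (G : nat -> nat -> nat -> R) :
  rsum M (fun x => rsum n (fun k1 => rsum n (fun k2 => G x k1 k2))) =
  rsum n (fun k1 => rsum n (fun k2 => rsum M (fun x => G x k1 k2))).
Proof. rewrite rsum_swap. apply rsum_ext; intros. apply rsum_swap. Qed.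

Lemma mtwo_sided_cauchy_product_cv n (a c : nat -> mat) (z : nat -> nat -> mat) A Z C :
  mabs1 n a -> mabs1 n c -> mabs2 n z ->
  mcv n (fun K => msum K a) A -> mcv n (fun K => msum K c) C ->
  mcv n (fun K => msum K (fun k => msum K (fun l => z k l))) Z ->
  mcv n (fun K => msum K (fun n1 => msum K (fun m => msum (S n1) (fun i => msum (S m) (fun j =>
      mmul n (mmul n (a (n1 - i)%nat) (z i j)) (c (m - j)%nat))))))
    (mmul n (mmul n A Z) C).
Proof.
intros Ha Hc Hz HA HC HZ p q Hp Hq. unfold msum, mmul.
apply (cv_ext (fun K => rsum n (fun k1 => rsum n (fun k2 => rsum K (fun n1 => rsum K (fun m =>
   rsum (S n1) (fun i => rsum (S m) (fun j => a (n1 - i)%nat p k1 * z i j k1 k2 * c (m - j)%nat k2 q)))))))).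
{ intros K. symmetry.
  rewrite <- rsum_pull2. apply rsum_ext; intros n1 _.
  rewrite <- rsum_pull2. apply rsum_ext; intros m _.
  rewrite <- rsum_pull2. apply rsum_ext; intros i _.
  rewrite <- rsum_pull2. apply rsum_ext; intros j _.
  rewrite rsum_swap. apply rsum_ext; intros k2 _. rewrite <- rsum_scal_r. auto. }
replace (rsum n (fun k2 => rsum n (fun k1 => A p k1 * Z k1 k2) * C k2 q))
  with (rsum n (fun k1 => rsum n (fun k2 => A p k1 * Z k1 k2 * C k2 q))).
2:{ rewrite rsum_swap. apply rsum_ext; intros. rewrite <- rsum_scal_r. auto. }
apply cv_rsum. intros k1 Hk1. apply cv_rsum. intros k2 Hk2.
destruct (Ha p k1) as [Ba HBa]; auto. destruct (Hc k2 q) as [Bc HBc]; auto.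
destruct (Hz k1 k2) as [Bz HBz]; auto.
apply (two_sided_cauchy_product_cv (fun t => a t p k1) (fun t => c t k2 q) (fun i j => z i j k1 k2) Ba Bc Bz);
  [auto | auto | auto | apply HA | apply HC | apply HZ]; auto.
Qed.

(** * Sums over compositions *)

Lemma msumL_app l1 l2 : msumL (l1 ++ l2) = madd (msumL l1) (msumL l2).
Proof.
induction l1; simpl; extensionality i; extensionality j; unfold madd;
  [unfold mzero | rewrite IHl1; unfold madd]; ring.
Qed.

Lemma msumL_flat_map {A} (G : A -> list mat) l :
  msumL (flat_map G l) = msumL (map (fun x => msumL (G x)) l).
Proof. induction l; simpl; auto. rewrite msumL_app, IHl. auto. Qed.

Lemma msumL_map_flat_map {A B} (F : B -> mat) (G : A -> list B) l :
  msumL (map F (flat_map G l)) = msumL (map (fun x => msumL (map F (G x))) l).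
Proof. induction l; simpl; auto. rewrite map_app, msumL_app, IHl. auto. Qed.

Lemma msumL_map_ext {A} (F G : A -> mat) l : (forall x, In x l -> F x = G x) ->
  msumL (map F l) = msumL (map G l).
Proof. intros H. f_equal. apply map_ext_in. auto. Qed.

Lemma msumL_map_meq {A} n (F G : A -> mat) l : (forall x, In x l -> meq n (F x) (G x)) ->
  meq n (msumL (map F l)) (msumL (map G l)).
Proof. induction l; simpl; intros H; [reflexivity|]. apply madd_proper; [apply H | apply IHl]; auto. Qed.

Lemma msumL_seq (F : nat -> mat) s n : msumL (map F (seq s n)) = msum n (fun k => F (s + k)%nat).
Proof.
revert s. induction n; intros s; simpl; [reflexivity|].
rewrite IHn. extensionality i; extensionality j. unfold madd, msum.
rewrite rsum_S_l, Nat.add_0_r. f_equal. apply rsum_ext; intros. f_equal. lia.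
Qed.

Lemma mmul_msumL_l {A} n X (F : A -> mat) l :
  mmul n X (msumL (map F l)) = msumL (map (fun x => mmul n X (F x)) l).
Proof.
induction l; simpl.
- extensionality i; extensionality j. unfold mmul, mzero. apply rsum_zero. intros; ring.
- rewrite mmul_madd_r, IHl. auto.
Qed.

Lemma compsF_fuel f n : (n <= f)%nat -> compsF (S f) n = compsF f n.
Proof.
revert n. induction f; intros n Hn; [replace n with 0%nat by lia; reflexivity|].
destruct n; [reflexivity|].
change (flat_map (fun c => map (cons c) (compsF (S f) (S n - c))) (seq 1 (S n)) =
        flat_map (fun c => map (cons c) (compsF f (S n - c))) (seq 1 (S n))).
rewrite !flat_map_concat_map. f_equal. apply map_ext_in. intros c Hc.
apply in_seq in Hc. rewrite IHf; auto. lia.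
Qed.

Lemma compsF_comps f n : (n <= f)%nat -> compsF f n = comps n.
Proof. intros H. unfold comps. induction H; auto. rewrite compsF_fuel; auto. Qed.

Lemma comps_S n : comps (S n) = flat_map (fun c => map (cons c) (comps (S n - c))) (seq 1 (S n)).
Proof.
unfold comps at 1. simpl compsF.
change (flat_map (fun c => map (cons c) (compsF n (S n - c))) (seq 1 (S n)) =
        flat_map (fun c => map (cons c) (comps (S n - c))) (seq 1 (S n))).
rewrite !flat_map_concat_map. f_equal. apply map_ext_in. intros c Hc.
apply in_seq in Hc. rewrite compsF_comps; auto. lia.
Qed.

Lemma msumL_comps_S (F : list nat -> mat) n :
  msumL (map F (comps (S n))) = msum (S n) (fun k => msumL (map (fun c' => F (S k :: c')) (comps (n - k)))).
Proof.
rewrite comps_S, msumL_map_flat_map, msumL_seq.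
extensionality i; extensionality j. unfold msum. apply rsum_ext; intros k Hk.
rewrite map_map. replace (S n - (1 + k))%nat with (n - k)%nat by lia. auto.
Qed.

Lemma comps_S_nonempty n c : In c (comps (S n)) -> c <> [].
Proof.
rewrite comps_S. intros H. apply in_flat_map in H. destruct H as [x [_ Hx]].
apply in_map_iff in Hx. destruct Hx as [c' [<- _]]. discriminate.
Qed.

Section CompositionSums.
Variables (b : nat) (Y : nat -> mat).

Definition cprod (l : list nat) : mat := fold_right (fun c acc => mmul b (Y c) acc) mid l.

Definition csum (n : nat) : mat := msumL (map cprod (comps n)).

Lemma csum_0 : csum 0 = mid.
Proof. unfold csum. simpl. extensionality i; extensionality j. unfold madd, mzero. ring. Qed.

Lemma csum_S n : csum (S n) = msum (S n) (fun k => mmul b (Y (S k)) (csum (n - k))).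
Proof.
unfold csum at 1. rewrite msumL_comps_S. extensionality i; extensionality j. unfold msum.
apply rsum_ext; intros k Hk. simpl. unfold csum. rewrite mmul_msumL_l. auto.
Qed.

Lemma cprod_last c : c <> [] -> meq b (cprod c) (mmul b (cprod (removelast c)) (Y (last c 0%nat))).
Proof.
induction c as [|x r IH]; intros H; [congruence|].
destruct r as [|y r].
- simpl. intros i j Hi Hj. rewrite mmul_mid_r, mmul_mid_l; auto.
- change (cprod (x :: y :: r)) with (mmul b (Y x) (cprod (y :: r))).
  change (removelast (x :: y :: r)) with (x :: removelast (y :: r)).
  change (last (x :: y :: r) 0%nat) with (last (y :: r) 0%nat).
  change (cprod (x :: removelast (y :: r))) with (mmul b (Y x) (cprod (removelast (y :: r)))).
  rewrite mmul_assoc. apply mmul_meq; [reflexivity | apply IH; discriminate].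
Qed.

Lemma msumL_by_last_part (X : nat -> mat) n :
  msumL (map (fun c => mmul b (cprod (removelast c)) (X (last c 0%nat))) (comps (S n))) =
  msum (S n) (fun k => mmul b (csum (n - k)) (X (S k))).
Proof.
induction n as [n IH] using lt_wf_ind.
set (G := fun c => mmul b (cprod (removelast c)) (X (last c 0%nat))).
rewrite msumL_comps_S.
assert (Hfirst : forall k t, (k < n)%nat -> (n - k)%nat = S t ->
   msumL (map (fun c' => G (S k :: c')) (comps (n - k))) =
   msum (S t) (fun l => mmul b (Y (S k)) (mmul b (csum (t - l)) (X (S l))))).
{ intros k t Hk Ht. rewrite Ht.
  rewrite (msumL_map_ext _ (fun c' => mmul b (Y (S k)) (G c'))).
  - rewrite <- mmul_msumL_l. unfold G. rewrite IH by lia. rewrite mmul_msum_r. auto.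
  - intros c' Hc'. apply comps_S_nonempty in Hc'. destruct c' as [|c1 r]; [congruence|]. unfold G.
    change (removelast (S k :: c1 :: r)) with (S k :: removelast (c1 :: r)).
    change (last (S k :: c1 :: r) 0%nat) with (last (c1 :: r) 0%nat).
    change (cprod (S k :: removelast (c1 :: r))) with (mmul b (Y (S k)) (cprod (removelast (c1 :: r)))).
    apply mmul_assoc. }
extensionality i; extensionality j. unfold msum. rewrite !rsum_S_r. f_equal.
- set (H := fun k l => mmul b (Y (S k)) (mmul b (csum (n - 1 - k - l)) (X (S l))) i j).
  rewrite (rsum_ext n _ (fun k => rsum (n - k) (fun l => H k l))).
  rewrite (rsum_ext n (fun k => mmul b (csum (n - k)) (X (S k)) i j) (fun k => rsum (n - k) (fun l => H l k))).
  + apply rsum_triangle_swap.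
  + intros k Hk. replace (n - k)%nat with (S (n - k - 1)) by lia.
    rewrite csum_S, mmul_msum_l. unfold msum. apply rsum_ext; intros l Hl. unfold H.
    rewrite mmul_assoc. replace (n - k - 1 - l)%nat with (n - 1 - l - k)%nat by lia. auto.
  + intros k Hk. rewrite (Hfirst k (n - k - 1)%nat) by lia. unfold msum.
    replace (S (n - k - 1)) with (n - k)%nat by lia. apply rsum_ext; intros l Hl. unfold H.
    replace (n - k - 1 - l)%nat with (n - 1 - k - l)%nat by lia. auto.
- rewrite Nat.sub_diag. simpl. unfold madd, mzero, G. rewrite csum_0. simpl. ring.
Qed.

Lemma csum_S_last n : meq b (csum (S n)) (msum (S n) (fun k => mmul b (csum (n - k)) (Y (S k)))).
Proof.
rewrite <- (msumL_by_last_part Y n). unfold csum. apply msumL_map_meq. intros c Hc.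
apply cprod_last. eapply comps_S_nonempty; eauto.
Qed.

Lemma msumL_by_first_part (F : nat -> mat) m :
  msumL (map (fun d => mmul b (F (hd 0%nat d)) (cprod (tl d))) (comps (S m))) =
  msum (S m) (fun l => mmul b (F (S l)) (csum (m - l))).
Proof.
rewrite msumL_comps_S. extensionality i; extensionality j. unfold msum.
apply rsum_ext; intros l Hl. simpl. unfold csum. rewrite mmul_msumL_l. auto.
Qed.
End CompositionSums.

(** * Matrix powers, Neumann series and block averages *)

Lemma mpow_comm n W k : meq n (mmul n W (mpow n W k)) (mmul n (mpow n W k) W).
Proof.
induction k; simpl.
- intros i j Hi Hj. rewrite mmul_mid_r, mmul_mid_l; auto.
- rewrite <- mmul_assoc. apply mmul_meq; [exact IHk | reflexivity].
Qed.

Lemma mpow_mtr n W k : meq n (mpow n (mtr W) k) (mtr (mpow n W k)).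
Proof.
induction k; simpl; [rewrite mtr_mid; reflexivity|].
rewrite IHk, <- mtr_mmul. apply mtr_meq, mpow_comm.
Qed.

Lemma mpow_mscale n c W k : mpow n (mscale c W) k = mscale (c ^ k) (mpow n W k).
Proof.
induction k; simpl.
- extensionality i; extensionality j. unfold mscale. ring.
- rewrite IHk, mmul_mscale_l, mmul_mscale_r. extensionality i; extensionality j. unfold mscale. ring.
Qed.

(* If the powers of V are entrywise absolutely summable, then sum_k V^k
   converges to the inverse P of I - V: telescoping gives
   (I - V) sum_{k<K} V^k = I - V^K and V^K -> 0. *)
Lemma neumann_series_cv N V P : mabs1 N (mpow N V) -> is_inverse N (madd mid (mscale (-1) V)) P ->
  mcv N (fun K => msum K (mpow N V)) P.
Proof.
intros H Hinv. destruct (mabs1_cv _ _ H) as [Sl HS].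
set (D := madd mid (mscale (-1) V)).
assert (Htele : forall K, meq N (mmul N D (msum K (mpow N V))) (madd mid (mscale (-1) (mpow N V K)))).
{ intros K i j Hi Hj. rewrite mmul_msum_r. unfold msum.
  rewrite (rsum_ext K _ (fun k => mpow N V k i j - mpow N V (S k) i j)).
  - rewrite rsum_telescope. unfold madd, mscale. simpl. ring.
  - intros k _. unfold D. rewrite mmul_madd_l, mmul_mscale_l. unfold madd, mscale.
    rewrite mmul_mid_l by auto. rewrite (mpow_comm N V k i j Hi Hj). simpl. ring. }
assert (HDS : meq N (mmul N D Sl) mid).
{ apply (mcv_unique N (fun K => mmul N D (msum K (mpow N V)))).
  - apply mcv_mmul; auto. apply mcv_const.
  - apply (mcv_ext N (fun K => madd mid (mscale (-1) (mpow N V K)))); [intros K; symmetry; apply Htele|].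
    intros i j Hi Hj. destruct (H i j Hi Hj) as [B HB].
    pose proof (CV_plus _ _ _ _ (cv_const (mid i j)) (cv_scal (-1) _ _ (abs_sum_term_cv0 _ _ HB))) as HH.
    rewrite Rmult_0_r, Rplus_0_r in HH. exact HH. }
apply (mcv_lim N _ Sl P); auto.
assert (HPD : meq N (mmul N P D) mid) by (intros i j Hi Hj; apply (Hinv i j Hi Hj)).
rewrite <- (mmul_mid_l' N Sl), <- HPD, mmul_assoc, HDS. apply mmul_mid_r'.
Qed.

Lemma is_inverse_mtr b A P : is_inverse b A P -> is_inverse b (mtr A) (mtr P).
Proof.
intros H i j Hi Hj. destruct (H j i Hj Hi) as [H1 H2].
rewrite <- !mtr_mmul. unfold mtr. rewrite H1, H2. unfold mid. rewrite Nat.eqb_sym. auto.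
Qed.

Lemma inverse_unique b A P P' : is_inverse b A P -> is_inverse b A P' -> meq b P P'.
Proof.
intros H H'.
assert (HPA : meq b (mmul b P A) mid) by (intros i j Hi Hj; apply H; auto).
assert (HAP' : meq b (mmul b A P') mid) by (intros i j Hi Hj; apply H'; auto).
rewrite <- (mmul_mid_r' b P), <- HAP', <- mmul_assoc, HPA. apply mmul_mid_l'.
Qed.

Lemma blockavg_msum N blk K F : blockavg N blk (msum K F) = msum K (fun k => blockavg N blk (F k)).
Proof.
extensionality p; extensionality q. unfold blockavg, msum. rewrite rsum_scal_l. f_equal.
rewrite (rsum_ext N _ (fun i => rsum K (fun k => rsum N (fun j =>
   if (Nat.eqb (blk i) p && Nat.eqb (blk j) q)%bool then F k i j else 0)))).
- apply rsum_swap.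
- intros i _. rewrite <- rsum_swap. apply rsum_ext; intros j _.
  destruct (andb _ _); [auto | rewrite rsum_zero; auto].
Qed.

Lemma blockavg_msum2 N blk K K' F : blockavg N blk (msum K (fun k => msum K' (fun l => F k l))) =
  msum K (fun k => msum K' (fun l => blockavg N blk (F k l))).
Proof. rewrite blockavg_msum. f_equal. extensionality k. apply blockavg_msum. Qed.

Lemma blockavg_mscale N blk c A : blockavg N blk (mscale c A) = mscale c (blockavg N blk A).
Proof.
extensionality p; extensionality q. unfold blockavg, mscale.
transitivity (/ (bsize N blk p * bsize N blk q) * (c * rsum N (fun i => rsum N (fun j =>
  if (Nat.eqb (blk i) p && Nat.eqb (blk j) q)%bool then A i j else 0)))); [f_equal|ring].
rewrite <- rsum_scal_l. apply rsum_ext; intros. rewrite <- rsum_scal_l. apply rsum_ext; intros. destruct (andb _ _); ring.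
Qed.

Lemma blockavg_cv N blk u L p q : mcv N u L -> Un_cv (fun K => blockavg N blk (u K) p q) (blockavg N blk L p q).
Proof.
intros H. unfold blockavg. apply cv_scal. apply cv_rsum. intros i Hi. apply cv_rsum. intros j Hj.
destruct (andb _ _); [apply H; auto | apply cv_const].
Qed.

Lemma bsize_pos N b blk p : is_partition N b blk -> (p < b)%nat -> 0 < bsize N blk p.
Proof.
intros [_ H] Hp. destruct (H p Hp) as [i [Hi Hbi]]. unfold bsize.
eapply Rlt_le_trans; [|apply (rsum_term_le N _ i)]; auto.
- cbv beta. rewrite Hbi, Nat.eqb_refl. lra.
- intros k. cbv beta. destruct (Nat.eqb _ _); lra.
Qed.

Definition diagm (d : nat -> R) : mat := fun p q => if Nat.eqb p q then d p else 0.

Lemma mmul_diagm b d e : meq b (mmul b (diagm d) (diagm e)) (diagm (fun p => d p * e p)).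
Proof.
intros p q Hp Hq. unfold mmul, diagm.
rewrite (rsum_ext b _ (fun k => if Nat.eqb k p then d p * (if Nat.eqb k q then e k else 0) else 0)).
- rewrite (rsum_delta b p (fun k => d p * (if Nat.eqb k q then e k else 0))) by auto.
  destruct (Nat.eqb p q); ring.
- intros k _. rewrite Nat.eqb_sym. destruct (Nat.eqb_spec k p); subst; ring.
Qed.

Lemma diagm_mid b d : (forall p, (p < b)%nat -> d p = 1) -> meq b (diagm d) mid.
Proof. intros H p q Hp Hq. unfold diagm, mid. destruct (Nat.eqb_spec p q); subst; auto. Qed.

Lemma mtr_diagm d : mtr (diagm d) = diagm d.
Proof.
extensionality p; extensionality q. unfold mtr, diagm.
destruct (Nat.eqb_spec q p), (Nat.eqb_spec p q); subst; auto; lia.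
Qed.

Section BlockSizes.
Variables (N b : nat) (blk : nat -> nat).
Hypotheses (Hpart : is_partition N b blk) (HN : (0 < N)%nat).

Lemma Emat_diagm : Emat N blk = diagm (fun p => bsize N blk p / INR N). Proof. reflexivity. Qed.
Lemma Einv_diagm : Einv N blk = diagm (fun p => INR N / bsize N blk p). Proof. reflexivity. Qed.

Lemma E_Einv : meq b (mmul b (Emat N blk) (Einv N blk)) mid.
Proof.
rewrite Emat_diagm, Einv_diagm, mmul_diagm. apply diagm_mid. intros p Hp.
pose proof (bsize_pos N b blk p Hpart Hp). assert (0 < INR N) by (apply lt_0_INR; lia).
field. split; lra.
Qed.

Lemma Einv_E : meq b (mmul b (Einv N blk) (Emat N blk)) mid.
Proof.
rewrite Emat_diagm, Einv_diagm, mmul_diagm. apply diagm_mid. intros p Hp.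
pose proof (bsize_pos N b blk p Hpart Hp). assert (0 < INR N) by (apply lt_0_INR; lia).
field. split; lra.
Qed.

(* The zeroth moment is E^-1, since <I>_B = diag(1/N_p). *)
Lemma mu_0_0 W : meq b (mu N blk W 0 0) (Einv N blk).
Proof.
intros p q Hpb Hqb. unfold mu, blockavg. simpl mpow.
rewrite (rsum_ext N _ (fun i => if Nat.eqb (blk i) p then (if Nat.eqb (blk i) q then 1 else 0) else 0)).
- unfold Einv. pose proof (bsize_pos N b blk p Hpart Hpb). assert (0 < INR N) by (apply lt_0_INR; lia).
  destruct (Nat.eqb_spec p q).
  + subst. rewrite (rsum_ext N _ (fun i => if Nat.eqb (blk i) q then 1 else 0)).
    * fold (bsize N blk q). rewrite Nat.add_0_l, pow_O. field. lra.
    * intros i _. destruct (Nat.eqb (blk i) q); auto.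
  + rewrite rsum_zero; [ring|]. intros i _.
    destruct (Nat.eqb_spec (blk i) p); destruct (Nat.eqb_spec (blk i) q); auto; lia.
- intros i Hi.
  rewrite (rsum_ext N _ (fun j => if Nat.eqb j i then (if (Nat.eqb (blk i) p && Nat.eqb (blk j) q)%bool then 1 else 0) else 0)).
  + rewrite (rsum_delta N i (fun j => if (Nat.eqb (blk i) p && Nat.eqb (blk j) q)%bool then 1 else 0)); auto.
    destruct (Nat.eqb (blk i) p); auto.
  + intros j Hj. rewrite mmul_mid_l by auto. unfold mid. rewrite (Nat.eqb_sym i j).
    destruct (Nat.eqb_spec j i); subst; destruct (andb _ _); auto.
Qed.
End BlockSizes.

Lemma mu_0_m N blk W m p q : mu N blk W 0 m p q = mu N blk W m 0 q p.
Proof.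
unfold mu. rewrite Nat.add_0_l, Nat.add_0_r. f_equal.
unfold blockavg. rewrite Rmult_comm with (r1 := bsize N blk p). f_equal.
rewrite rsum_swap. apply rsum_ext; intros j Hj. apply rsum_ext; intros i Hi.
rewrite Bool.andb_comm. destruct (andb _ _); auto.
simpl mpow at 1. simpl mpow at 2.
rewrite mmul_mid_l, mmul_mid_r by auto. rewrite (mpow_mtr N W m i j Hi Hj). reflexivity.
Qed.

Definition unitm i j : mat := fun p q => if (Nat.eqb p i && Nat.eqb q j)%bool then 1 else 0.

Lemma unit_sandwich b A i j : (i < b)%nat -> (j < b)%nat ->
  mmul b (mmul b (unitm i i) A) (unitm j j) = mscale (A i j) (unitm i j).
Proof.
intros Hi Hj. extensionality p; extensionality q. unfold mmul, mscale, unitm.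
assert (Hrow : forall k, rsum b (fun l => (if (Nat.eqb p i && Nat.eqb l i)%bool then 1 else 0) * A l k) =
   if Nat.eqb p i then A i k else 0).
{ intros k. destruct (Nat.eqb p i); simpl.
  - rewrite (rsum_ext b _ (fun l => if Nat.eqb l i then A l k else 0)).
    + apply (rsum_delta b i (fun l => A l k)); auto.
    + intros l _. destruct (Nat.eqb l i); ring.
  - apply rsum_zero. intros; ring. }
rewrite (rsum_ext b _ (fun k => (if Nat.eqb p i then A i k else 0) *
   (if (Nat.eqb k j && Nat.eqb q j)%bool then 1 else 0))) by (intros; rewrite Hrow; auto).
destruct (Nat.eqb p i); destruct (Nat.eqb q j); simpl;
  [| rewrite Rmult_0_r; apply rsum_zero; intros k _; destruct (Nat.eqb k j); simpl; ring
   | rewrite Rmult_0_r; apply rsum_zero; intros k _; ring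
   | rewrite Rmult_0_r; apply rsum_zero; intros k _; ring].
rewrite (rsum_ext b _ (fun k => if Nat.eqb k j then A i k else 0)).
- rewrite (rsum_delta b j (fun k => A i k)); auto. ring.
- intros k _. destruct (Nat.eqb k j); simpl; ring.
Qed.

Section Norm.
Variables (b : nat) (nrm : mat -> R).
Hypothesis Hn : is_submult_norm b nrm.

Lemma nrm_meq A B : meq b A B -> nrm A = nrm B.
Proof. destruct Hn as [H _]. intros E. apply H. exact E. Qed.
Lemma nrm_pos A : 0 <= nrm A. Proof. destruct Hn as [_ [H _]]. apply H. Qed.
Lemma nrm_scale c A : nrm (mscale c A) = Rabs c * nrm A. Proof. destruct Hn as [_ [_ [_ [H _]]]]. apply H. Qed.
Lemma nrm_add A B : nrm (madd A B) <= nrm A + nrm B. Proof. destruct Hn as [_ [_ [_ [_ [H _]]]]]. apply H. Qed.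
Lemma nrm_mul A B : nrm (mmul b A B) <= nrm A * nrm B. Proof. destruct Hn as [_ [_ [_ [_ [_ H]]]]]. apply H. Qed.

Lemma nrm_zero : nrm mzero = 0.
Proof.
replace mzero with (mscale 0 mzero); [rewrite nrm_scale, Rabs_R0; ring|].
extensionality i; extensionality j. unfold mscale, mzero. ring.
Qed.

Lemma nrm_msum K F : nrm (msum K F) <= rsum K (fun k => nrm (F k)).
Proof.
induction K; simpl.
- replace (msum 0 F) with mzero; [rewrite nrm_zero; lra|]. extensionality i; extensionality j. reflexivity.
- change (msum (S K) F) with (madd (msum K F) (F K)).
  eapply Rle_trans; [apply nrm_add|]. lra.
Qed.

(* Every entry is controlled by the norm (all norms on b x b matrices are
   equivalent; here directly via unit_sandwich). *)
Lemma entry_bound i j : (i < b)%nat -> (j < b)%nat ->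
  exists C, 0 <= C /\ forall A, Rabs (A i j) <= C * nrm A.
Proof.
intros Hi Hj.
assert (Hu : 0 < nrm (unitm i j)).
{ destruct (nrm_pos (unitm i j)) as [H|H]; auto. exfalso.
  destruct Hn as [_ [_ [Hd _]]]. specialize (Hd _ (eq_sym H) i j Hi Hj). unfold unitm in Hd.
  rewrite !Nat.eqb_refl in Hd. simpl in Hd. lra. }
exists (nrm (unitm i i) * nrm (unitm j j) / nrm (unitm i j)). split.
{ unfold Rdiv. apply Rmult_le_pos; [apply Rmult_le_pos; apply nrm_pos | left; apply Rinv_0_lt_compat; auto]. }
intros A.
assert (H1 : Rabs (A i j) * nrm (unitm i j) <= nrm (unitm i i) * nrm A * nrm (unitm j j)).
{ rewrite <- nrm_scale, <- (unit_sandwich b A i j Hi Hj). eapply Rle_trans; [apply nrm_mul|].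
  apply Rmult_le_compat_r; [apply nrm_pos | apply nrm_mul]. }
apply (Rmult_le_reg_r (nrm (unitm i j))); auto. unfold Rdiv.
replace (nrm (unitm i i) * nrm (unitm j j) * / nrm (unitm i j) * nrm A * nrm (unitm i j))
  with (nrm (unitm i i) * nrm A * nrm (unitm j j)) by (field; lra). auto.
Qed.

Lemma mabs1_of_nrm (a : nat -> mat) B : (forall K, rsum K (fun k => nrm (a k)) <= B) -> mabs1 b a.
Proof.
intros HB i j Hi Hj. destruct (entry_bound i j Hi Hj) as [C [HC HCb]].
exists (C * B). intros K. apply Rle_trans with (C * rsum K (fun k => nrm (a k))).
- rewrite <- rsum_scal_l. apply rsum_le. intros. apply HCb.
- apply Rmult_le_compat_l; auto.
Qed.

Lemma mabs2_of_nrm (z : nat -> nat -> mat) B :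
  (forall K, box K (fun k l => nrm (z k l)) <= B) -> mabs2 b z.
Proof.
intros HB i j Hi Hj. destruct (entry_bound i j Hi Hj) as [C [HC HCb]].
exists (C * B). intros K. apply Rle_trans with (C * box K (fun k l => nrm (z k l))).
- rewrite box_scal_l. apply box_le. intros. apply HCb.
- apply Rmult_le_compat_l; auto.
Qed.

Section GeometricBound.
Variables (Y : nat -> mat) (g s : R).
Hypotheses (Hs1 : s < 1) (Hs : forall K, rsum K (fun n => Rabs g ^ S n * nrm (Y (S n))) <= s).

Let a n := nrm (mscale (g ^ n) (csum b Y n)).
Let beta k := Rabs g ^ S k * nrm (Y (S k)).

Lemma csum_norm_recursion n : a (S n) <= rsum (S n) (fun k => beta k * a (n - k)%nat).
Proof.
unfold a. rewrite csum_S, <- msum_mscale.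
eapply Rle_trans; [apply nrm_msum|]. apply rsum_le. intros k Hk.
replace (g ^ S n) with (g ^ S k * g ^ (n - k)) by (rewrite <- pow_add; f_equal; lia).
replace (mscale (g ^ S k * g ^ (n - k)) (mmul b (Y (S k)) (csum b Y (n - k))))
  with (mmul b (mscale (g ^ S k) (Y (S k))) (mscale (g ^ (n - k)) (csum b Y (n - k)))).
- eapply Rle_trans; [apply nrm_mul|]. unfold beta. rewrite nrm_scale, RPow_abs. lra.
- rewrite mmul_mscale_l, mmul_mscale_r, mscale_mscale. f_equal; ring.
Qed.

Lemma csum_norm_bound K : rsum K (fun n => nrm (mscale (g ^ n) (csum b Y n))) <= nrm mid / (1 - s).
Proof.
fold a.
assert (Ha0 : a 0%nat = nrm mid) by (unfold a; rewrite csum_0, nrm_scale; simpl; rewrite Rabs_R1; ring).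
assert (Hapos : forall n, 0 <= a n) by (intros; apply nrm_pos).
assert (Hbpos : forall n, 0 <= beta n) by (intros; apply Rmult_le_pos; [apply pow_le, Rabs_pos | apply nrm_pos]).
assert (Hrec : rsum (S K) a <= a 0%nat + s * rsum (S K) a).
{ rewrite (rsum_S_l K a) at 1. apply Rplus_le_compat_l.
  eapply Rle_trans; [apply rsum_le; intros n _; apply csum_norm_recursion|].
  rewrite (rsum_antidiag K (fun p i => beta i * a p)).
  apply Rle_trans with (box K (fun p i => a p * beta i)).
  { apply box_le; intros p i _ _. pose proof (ind01 (Nat.ltb (p + i) K)).
    assert (0 <= beta i * a p) by (apply Rmult_le_pos; auto). nra. }
  rewrite <- rsum_prod, Rmult_comm.
  assert (HsK : rsum K beta <= s) by apply Hs.
  apply Rmult_le_compat; auto; [apply rsum_nonneg; auto | apply rsum_nonneg; auto | apply rsum_mono; auto]. }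
apply Rle_trans with (rsum (S K) a); [apply rsum_mono; auto|].
apply (Rmult_le_reg_r (1 - s)); [lra|]. unfold Rdiv.
rewrite Rmult_assoc, Rinv_l by lra. lra.
Qed.
End GeometricBound.
End Norm.

(** * The resolvent identity *)

(* L_n = g^n csum n and K_k = g^(k+1) Y_(k+1): the series sum_n L_n is the
   inverse of I - sum_k K_k, because L_(m+1) = sum_k K_k L_(m-k)
   = sum_k L_(m-k) K_k (grouping compositions by first or last part). *)
Definition resolvent_term b (Y : nat -> mat) g n := mscale (g ^ n) (csum b Y n).
Definition kernel_term (Y : nat -> mat) g k := mscale (g ^ S k) (Y (S k)).

Section Resolvent.
Variables (b : nat) (Y : nat -> mat) (g : R).
Let L := resolvent_term b Y g.
Let Kt := kernel_term Y g.

Lemma resolvent_term_0 : L 0%nat = mid.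
Proof. unfold L, resolvent_term. rewrite csum_0. extensionality i; extensionality j. unfold mscale. simpl. ring. Qed.

Lemma resolvent_term_S m : L (S m) = msum (S m) (fun k => mmul b (Kt k) (L (m - k)%nat)).
Proof.
unfold L, Kt, resolvent_term, kernel_term. rewrite csum_S, <- msum_mscale.
extensionality i; extensionality j. unfold msum. apply rsum_ext; intros k Hk.
rewrite mmul_mscale_l, mmul_mscale_r. unfold mscale.
replace (g ^ S m) with (g ^ S k * g ^ (m - k)) by (rewrite <- pow_add; f_equal; lia). ring.
Qed.

Lemma resolvent_term_S_last m : meq b (L (S m)) (msum (S m) (fun k => mmul b (L (m - k)%nat) (Kt k))).
Proof.
unfold L, Kt, resolvent_term, kernel_term. rewrite (csum_S_last b Y m), <- msum_mscale.
apply msum_meq. intros k Hk. rewrite mmul_mscale_l, mmul_mscale_r. intros i j _ _. unfold mscale.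
replace (g ^ S m) with (g ^ (m - k) * g ^ S k) by (rewrite <- pow_add; f_equal; lia). ring.
Qed.

Variables (Pl Kl : mat).
Hypotheses (HL : mabs1 b L) (HK : mabs1 b Kt)
  (HPl : mcv b (fun K => msum K L) Pl) (HKl : mcv b (fun K => msum K Kt) Kl).

Lemma resolvent_tail_cv : mcv b (fun K => msum K (fun m => L (S m))) (madd Pl (mscale (-1) mid)).
Proof.
intros i j Hi Hj. pose proof (CV_minus _ _ _ _ (cv_shift _ _ (HPl i j Hi Hj)) (cv_const (L 0%nat i j))) as H.
rewrite resolvent_term_0 in H.
apply (cv_ext (fun K => msum (S K) L i j - mid i j)).
- intros K. unfold msum. rewrite rsum_S_l, resolvent_term_0. ring.
- unfold madd, mscale. replace (Pl i j + -1 * mid i j) with (Pl i j - mid i j) by ring. exact H.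
Qed.

Lemma resolvent_left : meq b (mmul b Kl Pl) (madd Pl (mscale (-1) mid)).
Proof.
eapply mcv_unique; [apply (mcauchy_product_cv b Kt L Kl Pl); auto|].
apply (mcv_ext b (fun K => msum K (fun m => L (S m)))); [|apply resolvent_tail_cv].
intros K i j Hi Hj. unfold msum. apply rsum_ext. intros m Hm. rewrite resolvent_term_S. unfold msum.
rewrite <- (rsum_rev (S m)). apply rsum_ext. intros k Hk. simpl.
rewrite !Nat.sub_0_r. replace (m - (m - k))%nat with k by lia. auto.
Qed.

Lemma resolvent_right : meq b (mmul b Pl Kl) (madd Pl (mscale (-1) mid)).
Proof.
eapply mcv_unique; [apply (mcauchy_product_cv b L Kt Pl Kl); auto|].
apply (mcv_ext b (fun K => msum K (fun m => L (S m)))); [|apply resolvent_tail_cv].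
intros K i j Hi Hj. unfold msum. apply rsum_ext. intros m Hm. rewrite (resolvent_term_S_last m i j Hi Hj).
unfold msum. rewrite <- (rsum_rev (S m)). apply rsum_ext. intros k Hk. simpl.
rewrite !Nat.sub_0_r. replace (m - (m - k))%nat with k by lia. auto.
Qed.

Lemma resolvent_inverse : is_inverse b (madd mid (mscale (-1) Kl)) Pl.
Proof.
intros i j Hi Hj. rewrite mmul_madd_l, mmul_madd_r, mmul_mscale_l, mmul_mscale_r. unfold madd, mscale.
rewrite mmul_mid_l, mmul_mid_r, resolvent_left, resolvent_right by auto. unfold madd, mscale. split; ring.
Qed.
End Resolvent.

Section ResolventBounds.
Variables (b : nat) (nrm : mat -> R) (Y : nat -> mat) (g s : R).
Hypotheses (Hn : is_submult_norm b nrm)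
  (Hs : forall K, rsum K (fun n => Rabs g ^ S n * nrm (Y (S n))) <= s).

Lemma kernel_term_norm_bound K : rsum K (fun k => nrm (kernel_term Y g k)) <= s.
Proof.
eapply Rle_trans; [|apply (Hs K)]. right. apply rsum_ext. intros k _.
unfold kernel_term. rewrite (nrm_scale b nrm Hn), <- RPow_abs. auto.
Qed.

Lemma kernel_term_summable : mabs1 b (kernel_term Y g).
Proof. apply (mabs1_of_nrm b nrm Hn _ s), kernel_term_norm_bound. Qed.

Lemma resolvent_term_summable : s < 1 -> mabs1 b (resolvent_term b Y g).
Proof. intros Hs1. apply (mabs1_of_nrm b nrm Hn _ (nrm mid / (1 - s))), (csum_norm_bound b nrm Hn Y g s); auto. Qed.
End ResolventBounds.

Lemma chainK_split b E kap c : c <> [] ->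
  meq b (chainK b E kap c) (mmul b (Lpart b E kap (removelast c)) (kap (last c 0%nat))).
Proof.
induction c as [|x r IH]; intros H; [congruence|].
destruct r as [|y r].
- simpl. intros i j Hi Hj. rewrite mmul_mid_l; auto.
- change (chainK b E kap (x :: y :: r)) with (mmul b (mmul b (kap x) E) (chainK b E kap (y :: r))).
  change (removelast (x :: y :: r)) with (x :: removelast (y :: r)).
  change (last (x :: y :: r) 0%nat) with (last (y :: r) 0%nat).
  change (Lpart b E kap (x :: removelast (y :: r)))
    with (mmul b (mmul b (kap x) E) (Lpart b E kap (removelast (y :: r)))).
  rewrite (mmul_assoc b (mmul b (kap x) E)). apply mmul_meq; [reflexivity | apply IH; discriminate].
Qed.

Section CumulantExpansion.
Variables (N b : nat) (blk : nat -> nat) (W : mat) (kap : nat -> mat) (kap2 : nat -> nat -> mat).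
Hypothesis Hcum : are_motif_cumulants N b blk W kap kap2.
Let E := Emat N blk.
Let YL c := mmul b (kap c) E.
Let YR d := mmul b E (mtr (kap d)).
Let Y2 i j := madd (kap2 i j) (mmul b (mmul b (kap i) E) (mtr (kap j))).

Lemma mu_S_0 n : meq b (mu N blk W (S n) 0) (msum (S n) (fun k => mmul b (csum b YL (n - k)) (kap (S k)))).
Proof.
destruct Hcum as [H1 _]. intros p q Hp Hq. rewrite H1 by (auto; lia).
rewrite <- (msumL_by_last_part b YL kap n).
refine (msumL_map_meq b _ _ _ _ p q Hp Hq). intros c Hc.
apply chainK_split. eapply comps_S_nonempty; eauto.
Qed.

Lemma mu_S_S n m : meq b (mu N blk W (S n) (S m))
  (msum (S n) (fun k => mmul b (csum b YL (n - k))
     (msum (S m) (fun l => mmul b (Y2 (S k) (S l)) (csum b YR (m - l)))))).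
Proof.
destruct Hcum as [_ H2]. intros p q Hp Hq. rewrite H2 by (auto; lia).
rewrite msumL_flat_map.
rewrite <- (msumL_by_last_part b YL (fun i => msum (S m) (fun l => mmul b (Y2 i (S l)) (csum b YR (m - l)))) n).
f_equal. f_equal. extensionality c.
rewrite <- (msumL_by_first_part b YR (Y2 (last c 0%nat)) m).
rewrite mmul_msumL_l. f_equal. apply map_ext. intros d. unfold mixterm. simpl.
rewrite mmul_assoc. reflexivity.
Qed.
End CumulantExpansion.

(** * Spectral radius below 1 implies absolutely summable powers *)

(* For a complex matrix A with
   all eigenvalues of modulus < 1, the sequence s_k = (A^k)_ij is annihilated by
   the characteristic polynomial chi = prod_z (X - z) (Cayley-Hamilton), and
   each factor X - z with |z| < 1 preserves absolute summability backwards: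
   if (s_(k+1) - z s_k)_k is summable then so is s. *)
Module SpectralNeumann.
From HB Require Import structures.
From mathcomp Require Import all_boot all_order all_algebra.
From mathcomp Require Import complex Rstruct.
Import GRing.Theory Num.Theory Order.TTheory.
Local Open Scope ring_scope.

Section Recurrences.
Local Notation C := (complex Rdefinitions.R).
Implicit Types (y s : nat -> C) (p q : {poly C}) (z : C).

Definition abs_summable y := exists B : C, forall K, \sum_(n < K) `|y n| <= B.

Definition shift_op p s (n : nat) : C := \sum_(k < size p) p`_k * s (n + k)%N.

Lemma abs_summable_ext y y' : y =1 y' -> abs_summable y -> abs_summable y'.
Proof. by move=> e [B HB]; exists B => K; under eq_bigr do rewrite -e. Qed.

Lemma shift_op_wide p s n d : (size p <= d)%N -> shift_op p s n = \sum_(k < d) p`_k * s (n + k)%N.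
Proof.
move=> hd; rewrite /shift_op (big_ord_widen d (fun k => p`_k * s (n + k)%N) hd).
rewrite [RHS](bigID (fun k : 'I_d => (k < size p)%N)) /= [X in _ = _ + X]big1 ?addr0 //.
by move=> k; rewrite -leqNgt => hk; rewrite nth_default // mul0r.
Qed.

Lemma shift_op_XsubC z q s n : shift_op (('X - z%:P) * q) s n = shift_op q s n.+1 - z * shift_op q s n.
Proof.
have hs : (size (('X - z%:P) * q)%R <= (size q).+1)%N.
  apply: leq_trans (size_mul_leq _ _) _; rewrite size_XsubC /=; by [].
rewrite (shift_op_wide _ s n _ hs).
under eq_bigr do rewrite mulrBl coefB coefXM coefCM mulrBl.
rewrite sumrB big_ord_recl /= mul0r add0r.
rewrite (shift_op_wide _ s n _ (leqnSn (size q))) mulr_sumr.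
congr (_ - _).
  rewrite /shift_op; apply: eq_bigr => k _ /=; by rewrite addnS addSn.
by apply: eq_bigr => k _; rewrite mulrA.
Qed.

(* sum |y_(n+1)| <= B + |z| sum |y_n| bounds the partial sums of |y| by
   (|y_0| + B) / (1 - |z|). *)
Lemma abs_summable_factor z y : `|z| < 1 -> abs_summable (fun n => y n.+1 - z * y n) -> abs_summable y.
Proof.
move=> hz [B HB].
have hz' : 0 < 1 - `|z| by rewrite subr_gt0.
exists ((`|y 0%N| + B) / (1 - `|z|)) => K.
have step : \sum_(n < K.+1) `|y n| <= (`|y 0%N| + B) / (1 - `|z|).
  rewrite ler_pdivlMr //.
  have h1 : \sum_(n < K) `|y n.+1| <= B + `|z| * \sum_(n < K.+1) `|y n|.
    apply: le_trans (_ : \sum_(n < K) (`|y n.+1 - z * y n| + `|z| * `|y n|) <= _).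
      apply: ler_sum => n _.
      have -> : y n.+1 = (y n.+1 - z * y n) + z * y n by rewrite subrK.
      by rewrite (le_trans (ler_normD _ _)) // subrK normrM.
    rewrite big_split /= lerD // ?HB // -mulr_sumr ler_wpM2l ?normr_ge0 //.
    by rewrite [X in _ <= X]big_ord_recr /= lerDl normr_ge0.
  have h2 : \sum_(n < K.+1) `|y n| <= `|y 0%N| + (B + `|z| * \sum_(n < K.+1) `|y n|).
    by rewrite [X in X <= _]big_ord_recl /= lerD2l.
  by rewrite mulrBr mulr1 lerBlDr -addrA mulrC.
apply: le_trans step; rewrite big_ord_recr /= lerDl normr_ge0 //.
Qed.

Lemma abs_summable_roots rs s : (forall z, z \in rs -> `|z| < 1) ->
  abs_summable (shift_op (\prod_(z <- rs) ('X - z%:P)) s) -> abs_summable s.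
Proof.
elim: rs s => [|z rs IH] s hrs.
  rewrite big_nil; apply: abs_summable_ext => n.
  by rewrite /shift_op size_poly1 big_ord1 coefC eqxx mul1r addn0.
rewrite big_cons => h.
have h1 : abs_summable (shift_op (\prod_(j <- rs) ('X - j%:P)) s).
  apply: (abs_summable_factor z); first by apply: hrs; rewrite inE eqxx.
  by apply: abs_summable_ext h => n; rewrite shift_op_XsubC.
by apply: IH h1 => j hj; apply: hrs; rewrite inE hj orbT.
Qed.

(* Cayley-Hamilton: chi(A) = 0, so shift_op chi kills (A^k)_ij. *)
Lemma abs_summable_pow n' (A : 'M[C]_n'.+1) :
  (forall z, eigenvalue A z -> `|z| < 1) ->
  forall i j, abs_summable (fun k => (A ^+ k) i j).
Proof.
move=> hA i j.
pose chi := char_poly A.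
have [rs Hrs] := closed_field_poly_normal chi.
have lc : lead_coef chi = 1 by apply/monicP; apply: char_poly_monic.
rewrite lc scale1r in Hrs.
have hop : forall n, shift_op chi (fun k => (A ^+ k) i j) n = 0.
  move=> n.
  have CH := Cayley_Hamilton A.
  rewrite -/chi -{1}[chi]coefK poly_def linear_sum /= in CH.
  have : (A ^+ n * \sum_(k < size chi) horner_mx A (chi`_k *: 'X^k)) i j = 0.
    by rewrite CH mulr0 mxE.
  rewrite mulr_sumr summxE => <-; apply: eq_bigr => k _.
  by rewrite linearZ /= rmorphXn /= horner_mx_X -scalerAr -exprD mxE.
apply: (abs_summable_roots rs).
  move=> z hz; apply: hA; rewrite eigenvalue_root_char -/chi Hrs.
  by rewrite root_prod_XsubC.
rewrite -Hrs; exists 0 => K; rewrite big1 // => n _; by rewrite hop normr0.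
Qed.
End Recurrences.

Local Open Scope complex_scope.
Local Notation C := (complex Rdefinitions.R).
Local Notation RR := Rdefinitions.R.

Lemma sq_lt1 (x y : RR) : Rlt (Rplus (pow x 2) (pow y 2)) 1 -> x ^+ 2 + y ^+ 2 < 1.
Proof. move=> h; apply/RltP. by rewrite !expr2 /= !Rmult_1_r in h *. Qed.

Lemma rsum_big (n : nat) (f : nat -> RR) : rsum n f = \sum_(k < n) f k.
Proof. elim: n => [|n IH] /=; first by rewrite big_ord0. by rewrite big_ord_recr /= IH. Qed.

Lemma ReM (x : C) (r : RR) : complex.Re (x * (r%:C)) = complex.Re x * r.
Proof. case: x => a b /=. by rewrite mulr0 subr0. Qed.
Lemma ImM (x : C) (r : RR) : complex.Im (x * (r%:C)) = complex.Im x * r.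
Proof. case: x => a b /=. by rewrite mulr0 add0r. Qed.

Lemma ReMul (x y : C) : complex.Re (x * y) = complex.Re x * complex.Re y - complex.Im x * complex.Im y.
Proof. by case: x => a b; case: y => c d. Qed.
Lemma ImMul (x y : C) : complex.Im (x * y) = complex.Im x * complex.Re y + complex.Re x * complex.Im y.
Proof. case: x => a b; case: y => c d /=. by rewrite addrC. Qed.

Lemma normC_real (x : RR) : `|x%:C| = `|x|%:C.
Proof. by rewrite normc_def /= expr0n addr0 sqrtr_sqr. Qed.

(* The real matrix T, transposed, as a complex MathComp matrix; a complex
   eigenvector of its transpose is a pair (u, v) as in spectral_radius_lt1. *)
Section ComplexTranspose.
Variables (n' : nat) (T : mat).
Local Notation N := n'.+1.
Definition cmx : 'M[C]_N := \matrix_(i < N, j < N) ((T j i)%:C).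

Lemma cmx_pow k (i j : 'I_N) : (cmx ^+ k) i j = (mpow N T k j i)%:C.
Proof.
elim: k i j => [|k IH] i j.
  rewrite expr0 mxE /= /mid.
  case: (eqVneq i j) => [->|hij]; first by rewrite Nat.eqb_refl.
  case: (PeanoNat.Nat.eqb_spec j i) => [e|_] //.
  by move: hij; rewrite -val_eqE /= e eqxx.
rewrite exprS -mulmxE !mxE /= /mmul rsum_big rmorph_sum /=.
apply: eq_bigr => l _; rewrite mxE IH rmorphM /= mulrC; congr (_ * _)%R.
Qed.

Lemma cmx_eigen : spectral_radius_lt1 N T -> forall z, eigenvalue cmx z -> `|z| < 1.
Proof.
move=> hsp z /eigenvalueP [v hv vnz].
pose u k := complex.Re (v ord0 (inord k)).
pose w k := complex.Im (v ord0 (inord k)).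
have key : forall i : 'I_N, \sum_(l < N) v ord0 l * (T i l)%:C = z * v ord0 i.
  move=> i; move/matrixP: hv => /(_ ord0 i); rewrite !mxE => <-.
  by apply: eq_bigr => l _; rewrite mxE.
have H := hsp (complex.Re z) (complex.Im z) u w.
have hex : exists i, (i < N)%coq_nat /\ (u i <> 0%R \/ w i <> 0%R).
  have : exists i : 'I_N, v ord0 i != 0.
    apply/existsP; apply: contraNT vnz; rewrite negb_exists => /forallP h.
    by apply/eqP/rowP => i; rewrite mxE; apply/eqP; move: (h i); rewrite negbK.
  case=> i hi; exists (val i); split; first by apply/ssrnat.ltP; exact: ltn_ord.
  rewrite /u /w inord_val.
  case: (v ord0 i) hi => a b hab.
  case: (Req_dec a 0) => [ha|ha]; last by left.
  right => /= hb; move: hab; by rewrite ha hb eqxx.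
have heq : forall i, (i < N)%coq_nat ->
    rsum N (fun k => T i k * u k) = complex.Re z * u i - complex.Im z * w i /\
    rsum N (fun k => T i k * w k) = complex.Im z * u i + complex.Re z * w i.
  move=> i /ssrnat.ltP hi; have := key (Ordinal hi).
  move=> /(f_equal (fun x => (complex.Re x, complex.Im x))) [e1 e2].
  have hio : inord i = Ordinal hi by apply: val_inj; rewrite /= inordK.
  rewrite !rsum_big; split.
  + rewrite /u /w hio -ReMul -e1 raddf_sum /=; apply: eq_bigr => l _.
    by rewrite ReM inord_val mulrC.
  + rewrite /u /w hio -ImMul -e2 raddf_sum /=; apply: eq_bigr => l _.
    by rewrite ImM inord_val mulrC.
have hlt := H hex heq.
rewrite -(expr_lt1 (n := 2)) // -add_Re2_Im2 ltcR.
exact: sq_lt1.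
Qed.
End ComplexTranspose.

Lemma neumann_bound (N : nat) (T : mat) : spectral_radius_lt1 N T ->
  forall i j, (i < N)%coq_nat -> (j < N)%coq_nat ->
  exists B : RR, forall K, Rle (rsum K (fun n => Rabs (mpow N T n i j))) B.
Proof.
case: N => [|n'] hsp i j /ssrnat.ltP hi /ssrnat.ltP hj //.
have [B HB] := abs_summable_pow n' (cmx n' T) (@cmx_eigen n' T hsp) (inord j) (inord i).
exists (complex.Re B) => K; have := HB K.
under eq_bigr do rewrite cmx_pow !inordK // normC_real.
rewrite -rmorph_sum lecE => /andP [_ h]; apply/RleP; rewrite rsum_big.
exact: h.
Qed.
End SpectralNeumann.

Lemma spectral_powers_summable N T : spectral_radius_lt1 N T -> mabs1 N (mpow N T).
Proof. intros Hsp i j Hi Hj. exact (SpectralNeumann.neumann_bound N T Hsp i j Hi Hj). Qed.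

(* With Pl (I - Kg E) = I, (I - (Kg E)^T) Pr = I and Pr = Pl^T, the four
   pieces of the moment series recombine into Pl (E^-1 + M) Pr. *)
Lemma resolvent_algebra b Pl Pr Kg E Ei M :
  meq b (mmul b E Ei) mid -> meq b (mmul b Ei E) mid -> mtr E = E ->
  meq b (mmul b Pl (madd mid (mscale (-1) (mmul b Kg E)))) mid ->
  meq b (mmul b (madd mid (mscale (-1) (mtr (mmul b Kg E)))) Pr) mid ->
  Pr = mtr Pl ->
  meq b (madd (madd (madd Ei (mmul b Pl Kg)) (mtr (mmul b Pl Kg)))
              (mmul b (mmul b Pl (madd M (mmul b (mmul b Kg E) (mtr Kg)))) Pr))
        (mmul b (mmul b Pl (madd Ei M)) Pr).
Proof.
intros HEEi HEiE HEt H1 H2 HPr.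
assert (HPl : meq b Pl (madd mid (mmul b Pl (mmul b Kg E)))).
{ rewrite <- H1, mmul_madd_r, mmul_mscale_r. intros i j Hi Hj. unfold madd, mscale.
  rewrite mmul_mid_r by auto. ring. }
assert (HPr' : meq b Pr (madd mid (mmul b (mmul b E (mtr Kg)) Pr))).
{ rewrite mtr_mmul, HEt in H2.
  rewrite <- H2, mmul_madd_l, mmul_mscale_l. intros i j Hi Hj. unfold madd, mscale.
  rewrite mmul_mid_l by auto. ring. }
assert (HPEP : meq b (mmul b (mmul b Pl Ei) Pr)
   (madd (madd (madd Ei (mmul b (mtr Kg) Pr)) (mmul b Pl Kg))
         (mmul b (mmul b Pl (mmul b (mmul b Kg E) (mtr Kg))) Pr))).
{ rewrite HPl at 1. rewrite !mmul_madd_l, (mmul_mid_l' b Ei).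
  rewrite (mmul_assoc b Pl (mmul b Kg E) Ei), (mmul_assoc b Kg E Ei), HEEi, (mmul_mid_r' b Kg).
  rewrite HPr' at 1. rewrite mmul_madd_r, (mmul_mid_r' b Ei).
  rewrite <- (mmul_assoc b Ei (mmul b E (mtr Kg))), <- (mmul_assoc b Ei E), HEiE, (mmul_mid_l' b (mtr Kg)).
  rewrite HPr' at 2. rewrite (mmul_madd_r b (mmul b Pl Kg)), (mmul_mid_r' b (mmul b Pl Kg)).
  intros i j Hi Hj. unfold madd. rewrite !mmul_assoc. ring. }
rewrite (mmul_madd_r b Pl Ei M), (mmul_madd_l b (mmul b Pl Ei) (mmul b Pl M) Pr), HPEP.
rewrite HPr, mtr_mmul, (mmul_madd_r b Pl M), (mmul_madd_l b (mmul b Pl M)).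
intros i j Hi Hj. unfold madd. rewrite !mmul_assoc. ring.
Qed.

Section Assembly.
Variables (N b : nat) (W0 : mat) (a w : R) (blk : nat -> nat)
  (kap : nat -> mat) (kap2 : nat -> nat -> mat).
Hypotheses (HN : (0 < N)%nat) (Hpart : is_partition N b blk)
  (Hcum : are_motif_cumulants N b blk W0 kap kap2).

Let g := INR N * a * w.
Let E := Emat N blk.
Let Ei := Einv N blk.
Let YL c := mmul b (kap c) E.
Let YR d := mmul b E (mtr (kap d)).
Let Gk k := mscale (g ^ S k) (kap (S k)).
Let Mk k l := mscale (g ^ (S k + S l)) (kap2 (S k) (S l)).
Let Zk k l := madd (Mk k l) (mmul b (mmul b (Gk k) E) (mtr (Gk l))).
Let HEEi : meq b (mmul b E Ei) mid := E_Einv N b blk Hpart HN.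
Let HEiE : meq b (mmul b Ei E) mid := Einv_E N b blk Hpart HN.
Let HEt : mtr E = E := mtr_diagm _.

Let moment_sum K := msum K (fun n => msum K (fun m => mscale (g ^ (n + m)) (mu N blk W0 n m))).

(* Resolvent side: expanding P = sum T^k and Q = sum (T^T)^k shows that the
   moment series sums to N <P Q>_B. *)
Lemma moment_sum_limit (P Q : mat) :
  spectral_radius_lt1 N (mscale (a * w) W0) ->
  is_inverse N (madd mid (mscale (- (a * w)) W0)) P ->
  is_inverse N (madd mid (mscale (- (a * w)) (mtr W0))) Q ->
  forall p q, Un_cv (fun K => moment_sum K p q) (INR N * blockavg N blk (mmul N P Q) p q).
Proof.
intros Hsp HP HQ p q.
set (T := mscale (a * w) W0). set (V := mscale (a * w) (mtr W0)).
assert (HPK : mcv N (fun K => msum K (mpow N T)) P).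
{ apply neumann_series_cv; [apply spectral_powers_summable; auto|].
  replace (madd mid (mscale (-1) T)) with (madd mid (mscale (- (a * w)) W0)); auto.
  unfold T. extensionality i; extensionality j. unfold madd, mscale. ring. }
assert (HQK : mcv N (fun K => msum K (mpow N V)) Q).
{ apply neumann_series_cv.
  - intros i j Hi Hj. destruct (spectral_powers_summable N T Hsp j i Hj Hi) as [B HB]. exists B. intros K.
    eapply Rle_trans; [|apply (HB K)]. right. apply rsum_ext. intros n _.
    replace V with (mtr T) by reflexivity. rewrite (mpow_mtr N T n i j Hi Hj). reflexivity.
  - replace (madd mid (mscale (-1) V)) with (madd mid (mscale (- (a * w)) (mtr W0))); auto.
    unfold V. extensionality i; extensionality j. unfold madd, mscale. ring. }
assert (HNz : INR N <> 0) by (apply not_0_INR; lia).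
apply (cv_ext (fun K => INR N * blockavg N blk (mmul N (msum K (mpow N T)) (msum K (mpow N V))) p q)).
- intros K. rewrite mmul_msum2, blockavg_msum2. unfold moment_sum, msum. rewrite <- rsum_scal_l.
  apply rsum_ext; intros n _. rewrite <- rsum_scal_l. apply rsum_ext; intros m _.
  unfold T, V. rewrite !mpow_mscale, mmul_mscale_l, mmul_mscale_r, !blockavg_mscale. unfold mscale, mu, g.
  rewrite !pow_add, !Rpow_mult_distr. field. split; apply pow_nonzero; auto.
- apply cv_scal, blockavg_cv, mcv_mmul; auto.
Qed.

Section MomentSeries.
Variables (Pl Kl Rr M : mat).
Hypotheses (HLs : mabs1 b (resolvent_term b YL g)) (HRs : mabs1 b (resolvent_term b YR g))
  (HGs : mabs1 b Gk) (HZs : mabs2 b Zk)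
  (HPl : mcv b (fun K => msum K (resolvent_term b YL g)) Pl)
  (HKl : mcv b (fun K => msum K (kernel_term YL g)) Kl)
  (HRr : mcv b (fun K => msum K (resolvent_term b YR g)) Rr)
  (HM : mcv b (fun K => msum K (fun k => msum K (fun l => Mk k l))) M).

(* Kg = sum_n g^n kappa_n, recovered from Kl = Kg E. *)
Let Kg := mmul b Kl Ei.
Let Zs := madd M (mmul b (mmul b Kg E) (mtr Kg)).

Lemma cumulant_series_cv : mcv b (fun K => msum K Gk) Kg.
Proof.
apply (mcv_ext b (fun K => mmul b (msum K (kernel_term YL g)) Ei)); [|apply mcv_mmul; auto; apply mcv_const].
intros K. rewrite mmul_msum_l. apply msum_meq. intros k _.
unfold kernel_term, Gk, YL. rewrite mmul_mscale_l, mmul_assoc, HEEi, mmul_mid_r'. reflexivity.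
Qed.

Lemma interaction_series_cv : mcv b (fun K => msum K (fun k => msum K (fun l => Zk k l))) Zs.
Proof.
apply (mcv_ext b (fun K => madd (msum K (fun k => msum K (fun l => Mk k l)))
                                (mmul b (mmul b (msum K Gk) E) (mtr (msum K Gk))))).
- intros K. rewrite mmul_msum_l, mtr_msum, mmul_msum2, <- msum_madd.
  apply msum_meq. intros k _. rewrite <- msum_madd. reflexivity.
- apply mcv_madd; auto. apply mcv_mmul; [apply mcv_mmul; [apply cumulant_series_cv | apply mcv_const]|].
  apply mcv_mtr, cumulant_series_cv.
Qed.

Lemma first_column_cv :
  mcv b (fun K => msum K (fun n => mscale (g ^ (S n + 0)) (mu N blk W0 (S n) 0))) (mmul b Pl Kg).
Proof.
apply (mcv_ext b (fun K => msum K (fun m => msum (S m) (fun i => mmul b (resolvent_term b YL g (m - i)%nat) (Gk i))))).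
- intros K. apply msum_meq. intros n _. rewrite (mu_S_0 N b blk W0 kap kap2 Hcum n).
  rewrite <- msum_mscale. apply msum_meq. intros k Hk. unfold resolvent_term, Gk.
  rewrite mmul_mscale_l, mmul_mscale_r, mscale_mscale.
  replace (g ^ (S n + 0)) with (g ^ (n - k) * g ^ S k); [reflexivity|].
  rewrite <- pow_add. f_equal. lia.
- apply mcauchy_product_cv; auto. apply cumulant_series_cv.
Qed.

Lemma first_row_cv :
  mcv b (fun K => msum K (fun m => mscale (g ^ (0 + S m)) (mu N blk W0 0 (S m)))) (mtr (mmul b Pl Kg)).
Proof.
apply (mcv_ext b (fun K => mtr (msum K (fun n => mscale (g ^ (S n + 0)) (mu N blk W0 (S n) 0))))).
- intros K i j Hi Hj. unfold mtr, msum. apply rsum_ext. intros m _. unfold mscale.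
  rewrite (mu_0_m N blk W0 (S m) i j), Nat.add_0_r, Nat.add_0_l. reflexivity.
- apply mcv_mtr, first_column_cv.
Qed.

Lemma interior_cv :
  mcv b (fun K => msum K (fun n => msum K (fun m => mscale (g ^ (S n + S m)) (mu N blk W0 (S n) (S m)))))
    (mmul b (mmul b Pl Zs) Rr).
Proof.
apply (mcv_ext b (fun K => msum K (fun n1 => msum K (fun m => msum (S n1) (fun i => msum (S m) (fun j =>
   mmul b (mmul b (resolvent_term b YL g (n1 - i)%nat) (Zk i j)) (resolvent_term b YR g (m - j)%nat))))))).
- intros K. apply msum_meq; intros n _. apply msum_meq; intros m _.
  rewrite (mu_S_S N b blk W0 kap kap2 Hcum n m), <- msum_mscale. apply msum_meq; intros k Hk.
  rewrite mmul_msum_r, <- msum_mscale. apply msum_meq; intros l Hl.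
  unfold resolvent_term, Zk, Mk, Gk.
  assert (Hmid : madd (mscale (g ^ (S k + S l)) (kap2 (S k) (S l)))
      (mmul b (mmul b (mscale (g ^ S k) (kap (S k))) E) (mtr (mscale (g ^ S l) (kap (S l))))) =
      mscale (g ^ (S k + S l)) (madd (kap2 (S k) (S l)) (mmul b (mmul b (kap (S k)) E) (mtr (kap (S l)))))).
  { rewrite mtr_mscale, !mmul_mscale_l, mmul_mscale_r, mscale_mscale, <- pow_add.
    extensionality i; extensionality j. unfold madd, mscale. ring. }
  rewrite Hmid. repeat rewrite ?mmul_mscale_l, ?mmul_mscale_r, ?mscale_mscale.
  rewrite (mmul_assoc b (csum b YL (n - k))).
  match goal with |- meq _ (mscale ?c _) (mscale ?d _) => replace d with c; [reflexivity|] end.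
  rewrite <- !pow_add. f_equal. lia.
- apply mtwo_sided_cauchy_product_cv; auto. apply interaction_series_cv.
Qed.

Lemma moment_series_cv :
  mcv b moment_sum (madd (madd (madd Ei (mmul b Pl Kg)) (mtr (mmul b Pl Kg))) (mmul b (mmul b Pl Zs) Rr)).
Proof.
apply mcv_unshift.
apply (mcv_ext b (fun K => madd (madd (madd (mscale (g ^ (0 + 0)) (mu N blk W0 0 0))
  (msum K (fun n => mscale (g ^ (S n + 0)) (mu N blk W0 (S n) 0))))
  (msum K (fun m => mscale (g ^ (0 + S m)) (mu N blk W0 0 (S m)))))
  (msum K (fun n => msum K (fun m => mscale (g ^ (S n + S m)) (mu N blk W0 (S n) (S m))))))).
- intros K i j _ _. unfold moment_sum, msum, madd.
  exact (eq_sym (box_S K (fun n m => mscale (g ^ (n + m)) (mu N blk W0 n m) i j))).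
- apply mcv_madd; [apply mcv_madd; [apply mcv_madd|]|];
    [| apply first_column_cv | apply first_row_cv | apply interior_cv].
  apply (mcv_lim b _ (mscale (g ^ (0 + 0)) (mu N blk W0 0 0))); [|apply mcv_const].
  rewrite (mu_0_0 N b blk Hpart HN W0). intros i j _ _. unfold mscale. simpl. apply Rmult_1_l.
Qed.

Lemma block_average_resolvent_form (P Q : mat) :
  spectral_radius_lt1 N (mscale (a * w) W0) ->
  is_inverse N (madd mid (mscale (- (a * w)) W0)) P ->
  is_inverse N (madd mid (mscale (- (a * w)) (mtr W0))) Q ->
  is_inverse b (madd mid (mscale (-1) Kl)) Pl -> meq b Rr (mtr Pl) ->
  forall p q, (p < b)%nat -> (q < b)%nat ->
    INR N * blockavg N blk (mmul N P Q) p q = mmul b (mmul b Pl (madd Ei M)) (mtr Pl) p q.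
Proof.
intros Hsp HP HQ HinvL HRrPr p q Hp Hq.
assert (HKgE : meq b (mmul b Kg E) Kl) by (unfold Kg; rewrite mmul_assoc, HEiE; apply mmul_mid_r').
rewrite (UL_sequence _ _ _ (moment_sum_limit P Q Hsp HP HQ p q) (moment_series_cv p q Hp Hq)).
revert p q Hp Hq. change (meq b
  (madd (madd (madd Ei (mmul b Pl Kg)) (mtr (mmul b Pl Kg))) (mmul b (mmul b Pl Zs) Rr))
  (mmul b (mmul b Pl (madd Ei M)) (mtr Pl))).
rewrite HRrPr. apply resolvent_algebra; auto.
- rewrite HKgE. intros i j Hi Hj. apply (HinvL i j Hi Hj).
- rewrite HKgE, <- mtr_mid, <- mtr_mscale, <- mtr_madd, <- mtr_mmul.
  intros i j Hi Hj. unfold mtr. apply (HinvL j i Hj Hi).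
Qed.
End MomentSeries.

Section NormBounds.
Variables (nrm : mat -> R) (s1 s2 s3 : R).
Hypotheses (Hn : is_submult_norm b nrm) (Hs1lt : s1 < 1) (Hs2lt : s2 < 1)
  (Hs1 : forall K, rsum K (fun n => Rabs g ^ S n * nrm (YL (S n))) <= s1)
  (Hs2 : forall K, rsum K (fun n => Rabs g ^ S n * nrm (YR (S n))) <= s2)
  (Hs3 : forall K, box K (fun n m => Rabs g ^ (S n + S m) * nrm (kap2 (S n) (S m))) <= s3).

Lemma interaction_norm_bound K : box K (fun k l => nrm (Mk k l)) <= s3.
Proof.
eapply Rle_trans; [|apply (Hs3 K)]. right. apply box_ext. intros k l _ _.
unfold Mk. rewrite (nrm_scale b nrm Hn), <- RPow_abs. auto.
Qed.

(* g^k kappa_k = (g^k kappa_k E) E^-1. *)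
Lemma cumulant_terms_summable : mabs1 b Gk.
Proof.
apply (mabs1_of_nrm b nrm Hn _ (s1 * nrm Ei)). intros K.
apply Rle_trans with (rsum K (fun k => nrm (kernel_term YL g k) * nrm Ei)).
- apply rsum_le. intros k _. erewrite (nrm_meq b nrm Hn); [apply (nrm_mul b nrm Hn)|].
  unfold kernel_term, Gk, YL. rewrite mmul_mscale_l, mmul_assoc, HEEi, mmul_mid_r'. reflexivity.
- rewrite rsum_scal_r. apply Rmult_le_compat_r; [apply (nrm_pos b nrm Hn)|].
  apply (kernel_term_norm_bound b nrm YL g s1 Hn Hs1).
Qed.

(* g^(k+l) kappa_k E kappa_l^T = (g^k kappa_k E) E^-1 (g^l E kappa_l^T). *)
Lemma interaction_terms_summable : mabs2 b Zk.
Proof.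
apply (mabs2_of_nrm b nrm Hn _ (s3 + s1 * nrm Ei * s2)). intros K.
set (BL := kernel_term YL g). set (BR := kernel_term YR g).
assert (Hfactor : forall k l, meq b (mmul b (mmul b (Gk k) E) (mtr (Gk l))) (mmul b (BL k) (mmul b Ei (BR l)))).
{ intros k l. unfold Gk, BL, BR, kernel_term, YL, YR.
  rewrite mtr_mscale, !mmul_mscale_l, !mmul_mscale_r, !mscale_mscale.
  rewrite <- (mmul_assoc b Ei E (mtr (kap (S l)))), HEiE, mmul_mid_l', !mmul_assoc. reflexivity. }
apply Rle_trans with (box K (fun k l => nrm (Mk k l) + nrm (BL k) * nrm Ei * nrm (BR l))).
- apply box_le; intros k l _ _. unfold Zk.
  eapply Rle_trans; [apply (nrm_add b nrm Hn)|]. apply Rplus_le_compat_l.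
  rewrite (nrm_meq b nrm Hn _ _ (Hfactor k l)). eapply Rle_trans; [apply (nrm_mul b nrm Hn)|].
  rewrite Rmult_assoc. apply Rmult_le_compat_l; [apply (nrm_pos b nrm Hn) | apply (nrm_mul b nrm Hn)].
- unfold box. rewrite (rsum_ext K _ (fun k => rsum K (fun l => nrm (Mk k l)) + nrm (BL k) * nrm Ei * rsum K (fun l => nrm (BR l)))).
  + rewrite rsum_plus. apply Rplus_le_compat; [apply interaction_norm_bound|].
    rewrite rsum_scal_r, rsum_scal_r.
    pose proof (rsum_nonneg K (fun k => nrm (BL k)) (fun k _ => nrm_pos b nrm Hn _)).
    pose proof (rsum_nonneg K (fun k => nrm (BR k)) (fun k _ => nrm_pos b nrm Hn _)).
    pose proof (nrm_pos b nrm Hn Ei).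
    pose proof (kernel_term_norm_bound b nrm YL g s1 Hn Hs1 K).
    pose proof (kernel_term_norm_bound b nrm YR g s2 Hn Hs2 K).
    apply Rmult_le_compat; try apply Rmult_le_pos; auto. apply Rmult_le_compat_r; auto.
  + intros k _. rewrite rsum_plus, rsum_scal_l. auto.
Qed.

(* The theorem, up to the normalisation by S_x: the right series has
   kernel Kr = Kl^T and resolvent Pr = Pl^T. *)
Lemma block_average_cumulant_formula (P Q : mat) :
  spectral_radius_lt1 N (mscale (a * w) W0) ->
  is_inverse N (madd mid (mscale (- (a * w)) W0)) P ->
  is_inverse N (madd mid (mscale (- (a * w)) (mtr W0))) Q ->
  exists Kl Kr M Pl Pr : mat,
    mseries b (fun n => mscale (g ^ n) (mmul b (kap n) E)) Kl /\
    mseries b (fun m => mscale (g ^ m) (mmul b E (mtr (kap m)))) Kr /\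
    mseries2 b (fun n m => mscale (g ^ (n + m)) (kap2 n m)) M /\
    is_inverse b (madd mid (mscale (-1) Kl)) Pl /\
    is_inverse b (madd mid (mscale (-1) Kr)) Pr /\
    (forall p q, (p < b)%nat -> (q < b)%nat ->
       INR N * blockavg N blk (mmul N P Q) p q = mmul b (mmul b Pl (madd Ei M)) Pr p q).
Proof.
intros Hsp HP HQ.
pose proof (resolvent_term_summable b nrm YL g s1 Hn Hs1 Hs1lt) as HLs.
pose proof (resolvent_term_summable b nrm YR g s2 Hn Hs2 Hs2lt) as HRs.
pose proof (kernel_term_summable b nrm YL g s1 Hn Hs1) as HBLs.
pose proof (kernel_term_summable b nrm YR g s2 Hn Hs2) as HBRs.
pose proof (mabs2_of_nrm b nrm Hn Mk s3 interaction_norm_bound) as HMs.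
destruct (mabs1_cv _ _ HLs) as [Pl HPl]. destruct (mabs1_cv _ _ HBLs) as [Kl HKl].
destruct (mabs1_cv _ _ HRs) as [Rr HRr]. destruct (mabs2_cv _ _ HMs) as [M HM].
assert (HKr : mcv b (fun K => msum K (kernel_term YR g)) (mtr Kl)).
{ apply (mcv_ext b (fun K => mtr (msum K (kernel_term YL g)))); [|apply mcv_mtr; auto].
  intros K. rewrite mtr_msum. apply msum_meq. intros k _.
  unfold kernel_term, YL, YR. rewrite mtr_mscale, mtr_mmul, HEt. reflexivity. }
pose proof (resolvent_inverse b YL g Pl Kl HLs HBLs HPl HKl) as HinvL.
assert (HinvR : is_inverse b (madd mid (mscale (-1) (mtr Kl))) (mtr Pl)).
{ rewrite <- mtr_mid at 1. apply (is_inverse_mtr b _ _ HinvL). }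
assert (HRrPr : meq b Rr (mtr Pl)).
{ apply (inverse_unique b (madd mid (mscale (-1) (mtr Kl)))); auto.
  apply (resolvent_inverse b YR g Rr (mtr Kl)); auto. }
exists Kl, (mtr Kl), M, Pl, (mtr Pl). do 5 (split; [assumption|]).
apply (block_average_resolvent_form Pl Kl Rr M); auto.
- apply cumulant_terms_summable.
- apply interaction_terms_summable.
Qed.
End NormBounds.
End Assembly.

Theorem corollary1 (N b : nat) (W0 : mat) (a w Sx : R) (blk : nat -> nat)
    (kap : nat -> mat) (kap2 : nat -> nat -> mat) (P Q : mat) :
  0 < Sx ->
  spectral_radius_lt1 N (mscale (a * w) W0) ->
  is_inverse N (madd mid (mscale (- (a * w)) W0)) P ->
  is_inverse N (madd mid (mscale (- (a * w)) (mtr W0))) Q ->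
  is_partition N b blk ->
  are_motif_cumulants N b blk W0 kap kap2 ->
  (exists nrm : mat -> R, is_submult_norm b nrm /\
     (exists s, Un_cv (fun K => rsum K (fun n =>
          Rabs (INR N * a * w) ^ (S n) * nrm (mmul b (kap (S n)) (Emat N blk)))) s
        /\ s < 1) /\
     (exists s, Un_cv (fun K => rsum K (fun n =>
          Rabs (INR N * a * w) ^ (S n) * nrm (mmul b (Emat N blk) (mtr (kap (S n)))))) s
        /\ s < 1) /\
     (exists s, Un_cv (fun K => rsum K (fun n => rsum K (fun m =>
          Rabs (INR N * a * w) ^ (S n + S m) * nrm (kap2 (S n) (S m))))) s)) ->
  let g := INR N * a * w in
  let Sy := mscale Sx (mmul N P Q) in
  exists Kl Kr M Pl Pr : mat,
    mseries b (fun n => mscale (g ^ n) (mmul b (kap n) (Emat N blk))) Kl /\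
    mseries b (fun m => mscale (g ^ m) (mmul b (Emat N blk) (mtr (kap m)))) Kr /\
    mseries2 b (fun n m => mscale (g ^ (n + m)) (kap2 n m)) M /\
    is_inverse b (madd mid (mscale (-1) Kl)) Pl /\
    is_inverse b (madd mid (mscale (-1) Kr)) Pr /\
    (forall p q, (p < b)%nat -> (q < b)%nat ->
       blockavg N blk Sy p q / Sx =
       / INR N * mmul b (mmul b Pl (madd (Einv N blk) M)) Pr p q).
Proof.
intros HSx Hsp HP HQ Hpart Hcum Hnorm g Sy.
destruct (Nat.eq_dec b 0) as [Hb0|Hb].
{ subst b. exists mzero, mzero, mzero, mzero, mzero. unfold mseries, mseries2, is_inverse. repeat split; intros; lia. }
assert (HN : (0 < N)%nat) by (destruct Hpart as [_ H]; destruct (H 0%nat) as [i [Hi _]]; lia).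
destruct Hnorm as [nrm [Hn [[s1 [Hs1 Hs1lt]] [[s2 [Hs2 Hs2lt]] [s3 Hs3]]]]].
assert (Hterm : forall k A, 0 <= Rabs g ^ k * nrm A)
  by (intros; apply Rmult_le_pos; [apply pow_le, Rabs_pos | apply (nrm_pos b nrm Hn)]).
destruct (block_average_cumulant_formula N b W0 a w blk kap kap2 HN Hpart Hcum nrm s1 s2 s3 Hn Hs1lt Hs2lt
  (rsum_le_lim _ s1 (fun n => Hterm _ _) Hs1) (rsum_le_lim _ s2 (fun n => Hterm _ _) Hs2)
  (box_le_lim _ s3 (fun n m => Hterm _ _) Hs3) P Q Hsp HP HQ)
  as (Kl & Kr & M & Pl & Pr & HKl & HKr & HM & HinvL & HinvR & Hform).
exists Kl, Kr, M, Pl, Pr. do 5 (split; [assumption|]).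
intros p q Hp Hq. unfold Sy. rewrite blockavg_mscale. unfold mscale.
rewrite <- (Hform p q Hp Hq). field. split; [apply not_0_INR; lia | lra].
Qed.
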